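(* Let $r\colon \mathbb{N}_0 \to \{\pm 1\}$ be the Rudin-Shapiro sequence. For every $s \in \mathbb{N}$ there exists $c = c(s) > 0$ such that $\|r\|_{U^s[N]} = O(N^{-c})$ as $N \to \infty$.
   Context: The Rudin-Shapiro sequence is $r(n) = (-1)^{f_{11}(n)}$, where $f_{11}(n)$ is the number of (possibly overlapping) occurrences of the block $11$ in the binary expansion of $n$; equivalently $r(0)=1$, $r(2n)=r(n)$, $r(4n+1)=r(n)$, $r(4n+3)=-r(2n+1)$. For $N \in \mathbb{N}$ write $[N] = \{0,1,\dots,N-1\}$. For $s\in\mathbb{N}$ and $f\colon [N]\to\mathbb{R}$, the Gowers uniformity norm is defined by $\|f\|_{U^s[N]}^{2^s} = \mathbb{E}_{n,\mathbf h} \prod_{\omega\in\{0,1\}^s} f(n+\omega\cdot \mathbf h)$, where $\omega\cdot\mathbf h = \sum_{i=1}^s \omega_i h_i$ and the expectation is over all $n\in\mathbb{Z}$, $\mathbf h\in\mathbb{Z}^s$ such that the cube $\{n+\omega\cdot\mathbf h : \omega\in\{0,1\}^s\}$ is contained in $[N]$. Here $\|r\|_{U^s[N]}$ means the norm of the restriction of $r$ to $[N]$. *)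

From Stdlib Require Import Reals ZArith Arith List Bool.
Import ListNotations.
Open Scope R_scope.

Definition f11 (n : nat) : nat :=
  List.length (List.filter (fun i => Nat.testbit n i && Nat.testbit n (S i))
                           (List.seq 0 (S (Nat.log2 n)))).

Definition rudin_shapiro (n : nat) : R := (-1) ^ (f11 n).

Fixpoint cube_vertices (s : nat) : list (list bool) :=
  match s with
  | O => [ [] ]
  | S k => map (cons false) (cube_vertices k) ++ map (cons true) (cube_vertices k)
  end.

Definition zrange (lo : Z) (len : nat) : list Z :=
  map (fun k => (lo + Z.of_nat k)%Z) (List.seq 0 len).

Fixpoint zbox (s : nat) (lo : Z) (len : nat) : list (list Z) :=
  match s with
  | O => [ [] ]
  | S k => flat_map (fun x => map (cons x) (zbox k lo len)) (zrange lo len)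
  end.

Fixpoint wdot (w : list bool) (h : list Z) : Z :=
  match w, h with
  | b :: w', x :: h' => ((if b then x else 0) + wdot w' h')%Z
  | _, _ => 0%Z
  end.

Definition in_interval (N : nat) (x : Z) : bool :=
  ((0 <=? x) && (x <? Z.of_nat N))%Z.

Definition cube_in (s N : nat) (n : Z) (h : list Z) : bool :=
  forallb (fun w => in_interval N (n + wdot w h)) (cube_vertices s).

(* All (n, h) in Z x Z^s whose cube lies in [N].  Such n lie in [0, N) and
   every h_i lies in (-N, N) (since n and n + h_i are in [N]), so the
   enumeration below is exhaustive. *)
Definition gowers_configs (s N : nat) : list (Z * list Z) :=
  filter (fun p => cube_in s N (fst p) (snd p))
    (list_prod (zrange 0 N) (zbox s (1 - Z.of_nat N)%Z (2 * N - 1))).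

Definition cube_product (s : nat) (f : Z -> R) (n : Z) (h : list Z) : R :=
  fold_right Rmult 1 (map (fun w => f (n + wdot w h)%Z) (cube_vertices s)).

(* ||f||_{U^s[N]}^{2^s} = E_{n,h} prod_omega f(n + omega.h) *)
Definition gowers_avg (s N : nat) (f : Z -> R) : R :=
  fold_right Rplus 0
    (map (fun p => cube_product s f (fst p) (snd p)) (gowers_configs s N))
  / INR (length (gowers_configs s N)).

(* ||f||_{U^s[N]}: the nonnegative 2^s-th root (the average is always >= 0). *)
Definition gowers_norm (s N : nat) (f : Z -> R) : R :=
  let a := gowers_avg s N f in
  if Rle_dec a 0 then 0 else Rpower a (/ (2 ^ s)).

(* r viewed on Z (only its values on [N] enter the norm). *)
Definition rsZ (x : Z) : R := rudin_shapiro (Z.to_nat x).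

(* Reading binary digits from the bottom, [r (2 m + j) = +-r m], with sign [-1] exactly when
   [j] and [m] are both odd. Hence, if [n] and [h] are split into their [k] lowest binary digits
   and their high parts, the product of [r] over the cube [n + w.h] is a sign, determined by the
   low digits, times a product of the same kind over the high parts, twisted at each vertex by
   the carry out of the low digits and the parity of the last digit. Summing over the low
   digits is thus the [k]-th power of a transfer operator on finitely many carry states. In
   every block of [block_len] digits, two digit patterns lead from any bounded state to the zero
   state with opposite signs: the zero pattern, and one on which adding [2^(s+1)] creates a
   single extra block 11, at one vertex of the cube. So each block loses two of its [P] terms,
   and [k] digits gain a factor [(1 - 2/P)^(k / block_len)] over the trivial bound. Taking
   [2^k] of size about [N^(1/2)], the cubes on which truncation at [N] spoils this factorisation
   contribute [O(N^s 2^k)], against about [N^(s+1)] cubes in the average. *)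

From Stdlib Require Import Reals ZArith List Bool Lia Lra Psatz FunctionalExtensionality.
Import ListNotations.
Open Scope R_scope.

(** * Recursions for the Rudin-Shapiro sequence *)

Definition f11_below (n K : nat) : nat :=
  length (filter (fun i => Nat.testbit n i && Nat.testbit n (S i)) (seq 0 K)).

Lemma f11_eq_below n K : (S (Nat.log2 n) <= K)%nat -> f11 n = f11_below n K.
Proof.
  intros HK. unfold f11, f11_below.
  replace K with (S (Nat.log2 n) + (K - S (Nat.log2 n)))%nat by lia.
  rewrite seq_app, filter_app, length_app.
  enough (Hhigh : filter (fun i => Nat.testbit n i && Nat.testbit n (S i))
                    (seq (0 + S (Nat.log2 n)) (K - S (Nat.log2 n))) = []).
  { rewrite Hhigh. simpl. lia. }
  rewrite <- (filter_false (seq (0 + S (Nat.log2 n)) (K - S (Nat.log2 n)))).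
  apply filter_ext_in. intros i Hi. apply in_seq in Hi.
  rewrite (Nat.bits_above_log2 n i) by lia. reflexivity.
Qed.

Lemma f11_double_add m j : (j < 2)%nat ->
  f11 (2 * m + j) = ((if Nat.odd j && Nat.odd m then 1 else 0) + f11 m)%nat.
Proof.
  intros Hj.
  assert (Hdiv : ((2 * m + j) / 2 = m)%nat) by (symmetry; apply Nat.div_unique with j; lia).
  assert (Hm : (S (Nat.log2 m) <= 2 * m + j + 1)%nat) by (pose proof (Nat.log2_le_lin m); lia).
  assert (Hn : (S (Nat.log2 (2 * m + j)) <= S (2 * m + j + 1))%nat)
    by (pose proof (Nat.log2_le_lin (2 * m + j)); lia).
  rewrite (f11_eq_below _ _ Hn), (f11_eq_below _ _ Hm). unfold f11_below.
  change (seq 0 (S (2 * m + j + 1))) with (0%nat :: seq 1 (2 * m + j + 1)).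
  rewrite <- (seq_shift (2 * m + j + 1) 0). cbn [filter].
  assert (Hbit : forall i, Nat.testbit (2 * m + j) (S i) = Nat.testbit m i)
    by (intros i; rewrite <- Nat.div2_bits, Hdiv; reflexivity).
  assert (Hlow : Nat.testbit (2 * m + j) 0 && Nat.testbit (2 * m + j) 1 = Nat.odd j && Nat.odd m).
  { rewrite Hbit, !Nat.bit0_odd, Nat.odd_add, Nat.odd_mul. reflexivity. }
  rewrite Hlow.
  assert (Hshift : forall l, filter (fun i => Nat.testbit (2 * m + j) i && Nat.testbit (2 * m + j) (S i))
      (map S l) = map S (filter (fun i => Nat.testbit m i && Nat.testbit m (S i)) l)).
  { induction l as [|a l IH]; [reflexivity|]. cbn [map filter]. rewrite !Hbit, IH.
    destruct (Nat.testbit m a && Nat.testbit m (S a)); reflexivity. }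
  rewrite Hshift. destruct (Nat.odd j && Nat.odd m); cbn [length]; rewrite length_map; lia.
Qed.

Lemma f11_add_pow2 mu y : (y < 2 ^ S mu)%nat ->
  f11 (y + 2 ^ S mu) = (f11 y + (if (2 ^ mu <=? y)%nat then 1 else 0))%nat.
Proof.
  revert y; induction mu as [|mu IH]; intros y Hy.
  - simpl in Hy. destruct y as [|[|y]]; [reflexivity|reflexivity|lia].
  - pose proof (Nat.div_mod y 2 ltac:(lia)) as Hd.
    pose proof (Nat.mod_upper_bound y 2 ltac:(lia)) as Hm.
    set (z := (y / 2)%nat) in *. set (j := (y mod 2)%nat) in *.
    rewrite Nat.pow_succ_r' in Hy.
    replace (y + 2 ^ S (S mu))%nat with (2 * (z + 2 ^ S mu) + j)%nat
      by (rewrite (Nat.pow_succ_r' 2 (S mu)); lia).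
    rewrite f11_double_add, IH by lia.
    replace y with (2 * z + j)%nat at 1 by lia. rewrite f11_double_add by lia.
    assert (Ho : Nat.odd (z + 2 ^ S mu) = Nat.odd z).
    { rewrite Nat.odd_add, Nat.pow_succ_r', Nat.odd_mul. simpl. destruct (Nat.odd z); reflexivity. }
    rewrite Ho, (Nat.pow_succ_r' 2 mu).
    destruct (Nat.leb_spec (2 ^ mu) z), (Nat.leb_spec (2 * 2 ^ mu) y); lia.
Qed.

Lemma Nat_odd_Z_odd n : Nat.odd n = Z.odd (Z.of_nat n).
Proof.
  induction n as [|n IH]; [reflexivity|].
  rewrite Nat.odd_succ, <- Nat.negb_odd, IH, Nat2Z.inj_succ, Z.odd_succ, <- Z.negb_odd.
  reflexivity.
Qed.

Lemma rsZ_double_add z j : (0 <= z)%Z -> (0 <= j < 2)%Z ->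
  rsZ (2 * z + j) = (if Z.odd j && Z.odd z then -1 else 1) * rsZ z.
Proof.
  intros Hz Hj. unfold rsZ, rudin_shapiro.
  replace (Z.to_nat (2 * z + j)) with (2 * Z.to_nat z + Z.to_nat j)%nat by lia.
  rewrite f11_double_add, !Nat_odd_Z_odd, !Z2Nat.id by lia.
  destruct (Z.odd j && Z.odd z); simpl; ring.
Qed.

Definition pow2 (k : nat) : Z := (2 ^ Z.of_nat k)%Z.

Lemma pow2_S k : pow2 (S k) = (2 * pow2 k)%Z.
Proof. unfold pow2. rewrite Nat2Z.inj_succ, Z.pow_succ_r by lia. reflexivity. Qed.

Lemma pow2_pos k : (0 < pow2 k)%Z.
Proof. apply Z.pow_pos_nonneg; lia. Qed.

Lemma pow2_add a b : pow2 (a + b) = (pow2 a * pow2 b)%Z.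
Proof. unfold pow2. rewrite Nat2Z.inj_add, Z.pow_add_r by lia. reflexivity. Qed.

Lemma pow2_nat k : pow2 k = Z.of_nat (2 ^ k).
Proof. unfold pow2. rewrite Nat2Z.inj_pow. reflexivity. Qed.

Lemma pow2_gt k : (Z.of_nat k < pow2 k)%Z.
Proof. induction k as [|k IH]; [reflexivity|]. rewrite pow2_S. lia. Qed.

Lemma rsZ_add_pow2 mu y : (0 <= y < pow2 (S mu))%Z ->
  rsZ (y + pow2 (S mu)) = (if (pow2 mu <=? y)%Z then -1 else 1) * rsZ y.
Proof.
  intros Hy. unfold rsZ, rudin_shapiro. rewrite !pow2_nat in *.
  replace (Z.to_nat (y + Z.of_nat (2 ^ S mu))) with (Z.to_nat y + 2 ^ S mu)%nat by lia.
  rewrite f11_add_pow2, pow_add by lia.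
  destruct (Nat.leb_spec (2 ^ mu) (Z.to_nat y)), (Z.leb_spec (Z.of_nat (2 ^ mu)) y);
    simpl; try lia; ring.
Qed.

Lemma rsZ_mul_self y : rsZ y * rsZ y = 1.
Proof.
  unfold rsZ, rudin_shapiro. rewrite <- pow_add.
  replace (f11 (Z.to_nat y) + f11 (Z.to_nat y))%nat with (2 * f11 (Z.to_nat y))%nat by lia.
  rewrite pow_mult. replace ((-1) ^ 2) with 1 by ring. apply pow1.
Qed.

Definition sumR {A} (l : list A) (f : A -> R) : R := fold_right Rplus 0 (map f l).
Definition prodR {A} (l : list A) (f : A -> R) : R := fold_right Rmult 1 (map f l).

Section ListSums.
Context {A : Type}.

Lemma sumR_cons (f : A -> R) a l : sumR (a :: l) f = f a + sumR l f.
Proof. reflexivity. Qed.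

Lemma sumR_app (f : A -> R) l1 l2 : sumR (l1 ++ l2) f = sumR l1 f + sumR l2 f.
Proof. unfold sumR. rewrite map_app, fold_right_app. induction l1 as [|a l1 IH]; simpl; lra. Qed.

Lemma sumR_ext (f g : A -> R) l : (forall x, In x l -> f x = g x) -> sumR l f = sumR l g.
Proof. intros H. unfold sumR. f_equal. apply map_ext_in. exact H. Qed.

Lemma sumR_plus (f g : A -> R) l : sumR l (fun x => f x + g x) = sumR l f + sumR l g.
Proof. induction l as [|a l IH]; [unfold sumR; simpl; ring|]. rewrite !sumR_cons, IH. ring. Qed.

Lemma sumR_scal (f : A -> R) c l : sumR l (fun x => c * f x) = c * sumR l f.
Proof. induction l as [|a l IH]; [unfold sumR; simpl; ring|]. rewrite !sumR_cons, IH. ring. Qed.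

Lemma sumR_const (l : list A) c : sumR l (fun _ => c) = INR (length l) * c.
Proof.
  induction l as [|a l IH]; [unfold sumR; simpl; ring|].
  rewrite sumR_cons, IH, length_cons, S_INR. ring.
Qed.

Lemma sumR_zero (l : list A) (f : A -> R) : (forall x, In x l -> f x = 0) -> sumR l f = 0.
Proof. intros H. rewrite (sumR_ext _ (fun _ => 0)), sumR_const by exact H. ring. Qed.

Lemma sumR_filter (P : A -> bool) f l :
  sumR (filter P l) f = sumR l (fun x => if P x then f x else 0).
Proof.
  induction l as [|a l IH]; [reflexivity|]. simpl filter. rewrite (sumR_cons _ a l).
  destruct (P a); rewrite ?sumR_cons, IH; ring.
Qed.

Lemma length_filter_sumR (P : A -> bool) l :
  INR (length (filter P l)) = sumR l (fun x => if P x then 1 else 0).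
Proof. rewrite <- (Rmult_1_r (INR _)), <- sumR_const, sumR_filter. reflexivity. Qed.

Lemma sumR_le (f g : A -> R) l : (forall x, In x l -> f x <= g x) -> sumR l f <= sumR l g.
Proof.
  induction l as [|a l IH]; intros H; [unfold sumR; simpl; lra|]. rewrite !sumR_cons.
  pose proof (H a (or_introl eq_refl)). pose proof (IH (fun x Hx => H x (or_intror Hx))). lra.
Qed.

Lemma sumR_nonneg (f : A -> R) l : (forall x, In x l -> 0 <= f x) -> 0 <= sumR l f.
Proof. intros H. rewrite <- (Rmult_0_r (INR (length l))), <- sumR_const. apply sumR_le, H. Qed.

Lemma sumR_ge_term (f : A -> R) l x :
  (forall y, In y l -> 0 <= f y) -> In x l -> f x <= sumR l f.
Proof.
  induction l as [|a l IH]; intros H Hx; [destruct Hx|]. rewrite sumR_cons.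
  pose proof (H a (or_introl eq_refl)).
  pose proof (sumR_nonneg f l (fun y Hy => H y (or_intror Hy))).
  destruct Hx as [<-|Hx]; [lra|].
  pose proof (IH (fun y Hy => H y (or_intror Hy)) Hx). lra.
Qed.

Lemma sumR_abs (f : A -> R) l : Rabs (sumR l f) <= sumR l (fun x => Rabs (f x)).
Proof.
  induction l as [|a l IH]; [unfold sumR; simpl; rewrite Rabs_R0; lra|]. rewrite !sumR_cons.
  eapply Rle_trans; [apply Rabs_triang|]. lra.
Qed.

Lemma Rabs_sumR_sub_le (f g : A -> R) l :
  Rabs (sumR l f - sumR l g) <= sumR l (fun x => Rabs (f x - g x)).
Proof.
  induction l as [|a l IH]; [unfold sumR; simpl; rewrite Rminus_diag, Rabs_R0; lra|].
  rewrite !sumR_cons.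
  replace (f a + sumR l f - (g a + sumR l g)) with ((f a - g a) + (sumR l f - sumR l g)) by ring.
  eapply Rle_trans; [apply Rabs_triang|]. lra.
Qed.

Lemma sumR_abs_le (f : A -> R) l c : (forall x, In x l -> Rabs (f x) <= c) ->
  Rabs (sumR l f) <= INR (length l) * c.
Proof. intros H. eapply Rle_trans; [apply sumR_abs|]. rewrite <- sumR_const. apply sumR_le, H. Qed.

Lemma sumR_abs_remove (f : A -> R) l x c : (forall y, In y l -> Rabs (f y) <= c) -> In x l ->
  Rabs (sumR l f - f x) <= (INR (length l) - 1) * c.
Proof.
  induction l as [|a l IH]; intros H Hx; [destruct Hx|].
  rewrite sumR_cons, length_cons, S_INR.
  assert (Hl : forall y, In y l -> Rabs (f y) <= c) by (intros; apply H; right; auto).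
  destruct Hx as [<-|Hx].
  - replace (f a + sumR l f - f a) with (sumR l f) by ring.
    replace (INR (length l) + 1 - 1) with (INR (length l)) by ring.
    apply sumR_abs_le, Hl.
  - pose proof (H a (or_introl eq_refl)). pose proof (IH Hl Hx).
    replace (f a + sumR l f - f x) with (f a + (sumR l f - f x)) by ring.
    eapply Rle_trans; [apply Rabs_triang|]. lra.
Qed.

Lemma sumR_abs_cancel_pair (f : A -> R) l x1 x2 c : (forall y, In y l -> Rabs (f y) <= c) ->
  In x1 l -> In x2 l -> x1 <> x2 -> f x1 + f x2 = 0 ->
  Rabs (sumR l f) <= (INR (length l) - 2) * c.
Proof.
  induction l as [|a l IH]; intros H H1 H2 Hne Hs; [destruct H1|].
  rewrite sumR_cons, length_cons, S_INR.
  pose proof (H a (or_introl eq_refl)) as Ha.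
  assert (Hl : forall y, In y l -> Rabs (f y) <= c) by (intros; apply H; right; auto).
  destruct H1 as [E1|H1], H2 as [E2|H2]; [congruence| | |].
  - subst a. replace (f x1 + sumR l f) with (sumR l f - f x2) by lra.
    pose proof (sumR_abs_remove f l x2 c Hl H2). lra.
  - subst a. replace (f x2 + sumR l f) with (sumR l f - f x1) by lra.
    pose proof (sumR_abs_remove f l x1 c Hl H1). lra.
  - pose proof (IH Hl H1 H2 Hne Hs).
    eapply Rle_trans; [apply Rabs_triang|]. lra.
Qed.

Lemma prodR_cons (f : A -> R) a l : prodR (a :: l) f = f a * prodR l f.
Proof. reflexivity. Qed.

Lemma prodR_app (f : A -> R) l1 l2 : prodR (l1 ++ l2) f = prodR l1 f * prodR l2 f.
Proof.
  induction l1 as [|a l1 IH]; [unfold prodR; simpl; ring|].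
  rewrite <- app_comm_cons, !prodR_cons, IH. ring.
Qed.

Lemma prodR_ext (f g : A -> R) l : (forall x, In x l -> f x = g x) -> prodR l f = prodR l g.
Proof. intros H. unfold prodR. f_equal. apply map_ext_in. exact H. Qed.

Lemma prodR_mult (f g : A -> R) l : prodR l (fun x => f x * g x) = prodR l f * prodR l g.
Proof. induction l as [|a l IH]; [unfold prodR; simpl; ring|]. rewrite !prodR_cons, IH. ring. Qed.

Lemma prodR_one (l : list A) (f : A -> R) : (forall x, In x l -> f x = 1) -> prodR l f = 1.
Proof.
  induction l as [|a l IH]; intros H; [reflexivity|].
  rewrite prodR_cons, H, IH by (try intros; try apply H; simpl; auto). ring.
Qed.

Lemma prodR_zero (f : A -> R) l x : In x l -> f x = 0 -> prodR l f = 0.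
Proof.
  induction l as [|a l IH]; intros Hx H; [destruct Hx|].
  rewrite prodR_cons. destruct Hx as [<-|Hx]; [rewrite H|rewrite (IH Hx H)]; ring.
Qed.

Lemma prodR_abs_le1 (f : A -> R) l : (forall x, In x l -> Rabs (f x) <= 1) -> Rabs (prodR l f) <= 1.
Proof.
  induction l as [|a l IH]; intros H; [unfold prodR; simpl; rewrite Rabs_R1; lra|].
  rewrite prodR_cons, Rabs_mult.
  pose proof (H a (or_introl eq_refl)). pose proof (IH (fun y Hy => H y (or_intror Hy))).
  pose proof (Rabs_pos (f a)). pose proof (Rabs_pos (prodR l f)). nra.
Qed.

Lemma prodR_abs_one (f : A -> R) l : (forall x, In x l -> Rabs (f x) = 1) -> Rabs (prodR l f) = 1.
Proof.
  induction l as [|a l IH]; intros H; [apply Rabs_R1|].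
  rewrite prodR_cons, Rabs_mult, H, IH by (try intros; try apply H; simpl; auto). ring.
Qed.

End ListSums.

Lemma sumR_swap {A B} (l1 : list A) (l2 : list B) (f : A -> B -> R) :
  sumR l1 (fun x => sumR l2 (f x)) = sumR l2 (fun y => sumR l1 (fun x => f x y)).
Proof.
  induction l1 as [|a l1 IH].
  - symmetry. apply sumR_zero. reflexivity.
  - rewrite sumR_cons, IH, <- sumR_plus. reflexivity.
Qed.

Lemma sumR_map {A B} (g : A -> B) (f : B -> R) l : sumR (map g l) f = sumR l (fun x => f (g x)).
Proof. unfold sumR. rewrite map_map. reflexivity. Qed.

Lemma sumR_flat_map {A B} (g : A -> list B) (f : B -> R) l :
  sumR (flat_map g l) f = sumR l (fun x => sumR (g x) f).
Proof.
  induction l as [|a l IH]; [reflexivity|]. simpl flat_map. rewrite sumR_app, sumR_cons, IH. reflexivity.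
Qed.

Lemma sumR_list_prod {A B} (l1 : list A) (l2 : list B) f :
  sumR (list_prod l1 l2) f = sumR l1 (fun x => sumR l2 (fun y => f (x, y))).
Proof.
  induction l1 as [|a l1 IH]; [reflexivity|].
  simpl list_prod. rewrite sumR_app, sumR_cons, IH, sumR_map. reflexivity.
Qed.

Lemma prodR_map {A B} (g : A -> B) (f : B -> R) l : prodR (map g l) f = prodR l (fun x => f (g x)).
Proof. unfold prodR. rewrite map_map. reflexivity. Qed.

Lemma In_zrange x lo len : In x (zrange lo len) <-> (lo <= x < lo + Z.of_nat len)%Z.
Proof.
  unfold zrange. rewrite in_map_iff. split.
  - intros [k [<- Hk]]. apply in_seq in Hk. lia.
  - intros H. exists (Z.to_nat (x - lo)). split; [lia|]. apply in_seq. lia.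
Qed.

Lemma length_zrange lo len : length (zrange lo len) = len.
Proof. unfold zrange. rewrite length_map, length_seq. reflexivity. Qed.

Lemma zrange_cons lo len : zrange lo (S len) = lo :: zrange (lo + 1) len.
Proof.
  unfold zrange. cbn [seq map]. rewrite <- seq_shift, map_map. f_equal; [lia|].
  apply map_ext. intros; lia.
Qed.

Lemma zrange_app lo a b : zrange lo (a + b) = zrange lo a ++ zrange (lo + Z.of_nat a) b.
Proof.
  revert lo; induction a as [|a IH]; intros lo; [rewrite Z.add_0_r; reflexivity|].
  rewrite Nat.add_succ_l, !zrange_cons, IH. cbn [app]. do 3 f_equal. lia.
Qed.

Lemma zrange_S lo len : zrange lo (S len) = zrange lo len ++ [(lo + Z.of_nat len)%Z].
Proof.
  rewrite <- Nat.add_1_r, zrange_app. unfold zrange at 2. cbn. rewrite Z.add_0_r. reflexivity.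
Qed.

Lemma zrange_enclose lo len lo' len' :
  (lo' <= lo)%Z -> (lo + Z.of_nat len <= lo' + Z.of_nat len')%Z ->
  zrange lo' len' = zrange lo' (Z.to_nat (lo - lo')) ++ zrange lo len ++
    zrange (lo + Z.of_nat len) (Z.to_nat (lo' + Z.of_nat len' - lo - Z.of_nat len)).
Proof.
  intros H1 H2.
  set (b := Z.to_nat (lo' + Z.of_nat len' - lo - Z.of_nat len)).
  assert (Hlen : len' = (Z.to_nat (lo - lo') + (len + b))%nat) by (unfold b; lia).
  rewrite Hlen at 1. rewrite !zrange_app. do 3 f_equal; lia.
Qed.

Lemma sumR_zrange_ext (f : Z -> R) lo len lo' len' :
  (lo' <= lo)%Z -> (lo + Z.of_nat len <= lo' + Z.of_nat len')%Z ->
  (forall x, (x < lo \/ lo + Z.of_nat len <= x)%Z -> f x = 0) ->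
  sumR (zrange lo len) f = sumR (zrange lo' len') f.
Proof.
  intros H1 H2 H0. rewrite (zrange_enclose lo len lo' len') by assumption.
  rewrite !sumR_app, (sumR_zero (zrange lo' _)), (sumR_zero (zrange (lo + _) _)); [ring| |];
    intros x Hx; apply In_zrange in Hx; apply H0; lia.
Qed.

Lemma sumR_zrange_le (f : Z -> R) lo len lo' len' :
  (lo' <= lo)%Z -> (lo + Z.of_nat len <= lo' + Z.of_nat len')%Z -> (forall x, 0 <= f x) ->
  sumR (zrange lo len) f <= sumR (zrange lo' len') f.
Proof.
  intros H1 H2 H0. rewrite (zrange_enclose lo len lo' len') by assumption. rewrite !sumR_app.
  pose proof (sumR_nonneg f (zrange lo' (Z.to_nat (lo - lo'))) (fun x _ => H0 x)).
  pose proof (sumR_nonneg f (zrange (lo + Z.of_nat len) (Z.to_nat (lo' + Z.of_nat len' - lo - Z.of_nat len)))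
    (fun x _ => H0 x)).
  lra.
Qed.

Lemma In_zbox s lo len h : In h (zbox s lo len) <->
  length h = s /\ Forall (fun x => (lo <= x < lo + Z.of_nat len)%Z) h.
Proof.
  revert h; induction s as [|s IH]; intros h; simpl.
  - split.
    + intros [<-|[]]. split; auto.
    + intros [Hl _]. destruct h; [left; auto|discriminate].
  - rewrite in_flat_map. split.
    + intros [x [Hx Hh]]. apply in_map_iff in Hh. destruct Hh as [h' [<- Hh']].
      apply IH in Hh'. destruct Hh'. apply In_zrange in Hx. simpl. split; auto.
    + intros [Hl HF]. destruct h as [|x h']; [discriminate|]. inversion HF; subst.
      exists x. split; [apply In_zrange; auto|]. apply in_map. apply IH. split; auto.
Qed.

Lemma length_zbox s lo len : length (zbox s lo len) = (len ^ s)%nat.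
Proof.
  induction s as [|s IH]; [reflexivity|]. simpl zbox.
  assert (H : forall l : list Z,
    length (flat_map (fun x => map (cons x) (zbox s lo len)) l) = (length l * len ^ s)%nat).
  { induction l as [|a l IHl]; [reflexivity|]. simpl. rewrite length_app, length_map, IHl, IH. lia. }
  rewrite H, length_zrange. simpl. lia.
Qed.

Lemma zbox_1 s lo : zbox s lo 1 = [repeat lo s].
Proof.
  induction s as [|s IH]; [reflexivity|]. simpl. rewrite IH. simpl. rewrite Z.add_0_r. reflexivity.
Qed.

Lemma sumR_zbox_S s lo len (f : list Z -> R) :
  sumR (zbox (S s) lo len) f =
  sumR (zrange lo len) (fun x => sumR (zbox s lo len) (fun h => f (x :: h))).
Proof. simpl zbox. rewrite sumR_flat_map. apply sumR_ext. intros. apply sumR_map. Qed.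

Lemma sumR_zbox_ext s (f : list Z -> R) lo len lo' len' :
  (lo' <= lo)%Z -> (lo + Z.of_nat len <= lo' + Z.of_nat len')%Z ->
  (forall h, length h = s -> ~ Forall (fun x => lo <= x < lo + Z.of_nat len)%Z h -> f h = 0) ->
  sumR (zbox s lo len) f = sumR (zbox s lo' len') f.
Proof.
  revert f; induction s as [|s IH]; intros f H1 H2 H0; [reflexivity|].
  rewrite !sumR_zbox_S, (sumR_zrange_ext _ lo len lo' len'); auto.
  - apply sumR_ext. intros x Hx. apply IH; auto. intros h Hl Hn. apply H0; simpl; auto.
    intros Ha. inversion Ha; auto.
  - intros x Hx. apply sumR_zero. intros h Hh. apply In_zbox in Hh. destruct Hh as [Hl _].
    apply H0; simpl; auto. intros Ha. inversion Ha; subst. lia.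
Qed.

Lemma sumR_zbox_le s (f : list Z -> R) lo len lo' len' :
  (lo' <= lo)%Z -> (lo + Z.of_nat len <= lo' + Z.of_nat len')%Z -> (forall h, 0 <= f h) ->
  sumR (zbox s lo len) f <= sumR (zbox s lo' len') f.
Proof.
  revert f; induction s as [|s IH]; intros f H1 H2 H0; [apply Rle_refl|].
  rewrite !sumR_zbox_S. eapply Rle_trans.
  - apply sumR_le. intros x _. apply (IH (fun h => f (x :: h))); auto.
  - apply sumR_zrange_le; auto. intros x. apply sumR_nonneg. auto.
Qed.

Lemma Z_mul_add_mod_div P u e : (0 <= e < P)%Z -> ((P * u + e) mod P = e /\ (P * u + e) / P = u)%Z.
Proof.
  intros He. rewrite Z.add_comm, Z.mul_comm, Z.mod_add, Z.div_add, Z.mod_small, Z.div_small by lia.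
  split; lia.
Qed.

Fixpoint join_digits (P : Z) (v d : list Z) : list Z :=
  match v, d with
  | a :: v', b :: d' => (P * a + b)%Z :: join_digits P v' d'
  | _, _ => []
  end.

Lemma join_digits_mod_div P v d : length v = length d -> Forall (fun x => 0 <= x < P)%Z d ->
  map (fun x => x mod P)%Z (join_digits P v d) = d /\ map (fun x => x / P)%Z (join_digits P v d) = v.
Proof.
  revert d; induction v as [|a v IH]; intros d Hl HF; destruct d as [|b d]; try discriminate; [auto|].
  inversion HF; subst. simpl. destruct (IH d) as [E1 E2]; auto.
  destruct (Z_mul_add_mod_div P a b) as [E3 E4]; auto.
  rewrite E1, E2, E3, E4. auto.
Qed.

Lemma sumR_zrange_join (P b : nat) (a : Z) (f : Z -> R) :
  sumR (zrange (Z.of_nat P * a) (P * b)) f =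
  sumR (zrange a b) (fun u => sumR (zrange 0 P) (fun e => f (Z.of_nat P * u + e)%Z)).
Proof.
  induction b as [|b IH]; [rewrite Nat.mul_0_r; reflexivity|].
  rewrite Nat.mul_succ_r, zrange_app, sumR_app, IH, zrange_S, sumR_app. f_equal.
  rewrite sumR_cons. unfold sumR at 3; simpl; rewrite Rplus_0_r.
  unfold zrange at 1 2. rewrite !sumR_map. apply sumR_ext. intros. f_equal. lia.
Qed.

Lemma sumR_zbox_join (P b : nat) (a : Z) s (f : list Z -> R) :
  sumR (zbox s (Z.of_nat P * a) (P * b)) f =
  sumR (zbox s a b) (fun v => sumR (zbox s 0 P) (fun d => f (join_digits (Z.of_nat P) v d))).
Proof.
  revert f; induction s as [|s IH]; intros f; [unfold sumR; simpl; ring|].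
  rewrite !sumR_zbox_S.
  rewrite (sumR_ext _ (fun x => sumR (zbox s a b) (fun v => sumR (zbox s 0 P)
    (fun d => f (x :: join_digits (Z.of_nat P) v d))))) by (intros; apply IH).
  rewrite sumR_zrange_join. apply sumR_ext. intros u _.
  rewrite sumR_swap. apply sumR_ext. intros v _. rewrite sumR_zbox_S. reflexivity.
Qed.

Lemma In_cube_vertices s w : In w (cube_vertices s) <-> length w = s.
Proof.
  revert w; induction s as [|s IH]; intros w; simpl.
  - split; [intros [<-|[]]; reflexivity|]. destruct w; [auto|discriminate].
  - rewrite in_app_iff, !in_map_iff. split.
    + intros [[w' [<- H]]|[w' [<- H]]]; apply IH in H; simpl; lia.
    + intros H. destruct w as [|b w]; [discriminate|]. simpl in H.
      destruct b; [right|left]; exists w; split; auto; apply IH; lia.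
Qed.

Lemma length_cube_vertices s : length (cube_vertices s) = (2 ^ s)%nat.
Proof. induction s as [|s IH]; [reflexivity|]. simpl. rewrite length_app, !length_map, IH. lia. Qed.

Lemma wdot_cons b w x h : wdot (b :: w) (x :: h) = ((if b then x else 0) + wdot w h)%Z.
Proof. reflexivity. Qed.

Lemma wdot_split (f g : Z -> Z) c w h : (forall x, x = f x + c * g x)%Z ->
  wdot w h = (wdot w (map f h) + c * wdot w (map g h))%Z.
Proof.
  intros H. revert h; induction w as [|b w IH]; intros h; [simpl; lia|].
  destruct h as [|x h]; [simpl; lia|]. simpl. rewrite (IH h).
  specialize (H x). destruct b; [rewrite H at 1|]; ring.
Qed.

Lemma wdot_bounds w h c : Forall (fun x => (0 <= x <= c)%Z) h ->
  (0 <= wdot w h <= Z.of_nat (length h) * c)%Z.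
Proof.
  revert w; induction h as [|x h IH]; intros w HF; [destruct w as [|[] w]; simpl; lia|].
  inversion HF as [|? ? Hx Hh]; subst.
  destruct w as [|b w]; cbn [length wdot].
  - pose proof (IH [] Hh) as IH'. simpl in IH'. nia.
  - pose proof (IH w Hh) as IH'. destruct b; nia.
Qed.

Lemma wdot_repeat_one_bounds w k : (0 <= wdot w (repeat 1%Z k) <= Z.of_nat k)%Z.
Proof.
  pose proof (wdot_bounds w (repeat 1%Z k) 1) as H. rewrite repeat_length, Z.mul_1_r in H.
  apply H, Forall_forall. intros x Hx. apply repeat_spec in Hx. lia.
Qed.

Lemma wdot_zeros w h : Forall (fun x => x = 0%Z) h -> wdot w h = 0%Z.
Proof.
  revert h; induction w as [|b w IH]; intros h HF; [reflexivity|].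
  destruct h as [|x h]; [reflexivity|]. inversion HF; subst. simpl. rewrite IH by auto. destruct b; lia.
Qed.

Lemma wdot_falses k h : wdot (repeat false k) h = 0%Z.
Proof.
  revert h; induction k as [|k IH]; intros h; [reflexivity|]. destruct h; [reflexivity|].
  apply IH.
Qed.

Lemma wdot_unit h1 x h2 :
  wdot (repeat false (length h1) ++ true :: repeat false (length h2)) (h1 ++ x :: h2) = x.
Proof. induction h1 as [|y h1 IH]; simpl; [rewrite wdot_falses|rewrite IH]; lia. Qed.

(** * The carry automaton *)

(* For [z >= 0], [rs_twist a z = r (2 z + a)]. *)
Definition rs_twist (a : bool) (z : Z) : R :=
  if (z <? 0)%Z then 0 else if a && Z.odd z then - rsZ z else rsZ z.

Lemma rs_twist_double_add a y t :
  rs_twist a (2 * y + t) = (if a && Z.odd t then -1 else 1) * rs_twist (Z.odd t) (y + t / 2).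
Proof.
  set (z := (y + t / 2)%Z). set (j := (t mod 2)%Z).
  assert (Hj : (0 <= j < 2)%Z) by (apply Z.mod_pos_bound; lia).
  assert (E : (2 * y + t = 2 * z + j)%Z) by (unfold z, j; pose proof (Z.div_mod t 2); lia).
  assert (Ot : Z.odd t = Z.odd j) by (unfold j; rewrite Zmod_odd; destruct (Z.odd t); reflexivity).
  assert (Oj : Z.odd (2 * z + j) = Z.odd j) by (rewrite Z.add_comm, Z.odd_add_mul_2; reflexivity).
  rewrite E, Ot. unfold rs_twist. rewrite Oj.
  destruct (Z.ltb_spec z 0), (Z.ltb_spec (2 * z + j) 0); try lia; [ring|].
  rewrite rsZ_double_add by lia. destruct a, (Z.odd j), (Z.odd z); simpl; ring.
Qed.

Lemma Rabs_rs_twist_le a z : Rabs (rs_twist a z) <= 1.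
Proof.
  unfold rs_twist, rsZ, rudin_shapiro. destruct (z <? 0)%Z; [rewrite Rabs_R0; lra|].
  destruct (a && Z.odd z); rewrite ?Rabs_Ropp, pow_1_abs; lra.
Qed.

(* At every vertex [w] of the cube, a state holds the carry of the addition [n + w.h] performed
   digit by digit, and a flag telling whether the last digit produced was 1 (a next digit 1 then
   completes a block 11). *)
Definition state : Type := ((list bool -> bool) * (list bool -> Z))%type.
Definition state0 : state := (fun _ => false, fun _ => 0%Z).

Lemma state_eq0 (σ : state) : (forall w, fst σ w = false) -> (forall w, snd σ w = 0%Z) -> σ = state0.
Proof.
  destruct σ as [a q]. simpl. intros H1 H2. unfold state0.
  f_equal; apply functional_extensionality; auto.
Qed.

Definition map_mod2 (D : list Z) : list Z := map (fun x => x mod 2)%Z D.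
Definition map_div2 (D : list Z) : list Z := map (fun x => x / 2)%Z D.

Lemma wdot_mod2_div2 w D : wdot w D = (wdot w (map_mod2 D) + 2 * wdot w (map_div2 D))%Z.
Proof. apply wdot_split. intros x. pose proof (Z.div_mod x 2). lia. Qed.

Definition digits_lt (k : nat) (E : Z) (D : list Z) : Prop :=
  (0 <= E < pow2 k)%Z /\ Forall (fun x => 0 <= x < pow2 k)%Z D.

Lemma digits_lt_S k E D : digits_lt (S k) E D -> digits_lt k (E / 2) (map_div2 D).
Proof.
  unfold digits_lt, map_div2. rewrite pow2_S. pose proof (pow2_pos k). intros [H1 H2]. split.
  - split; [apply Z.div_pos|apply Z.div_lt_upper_bound]; lia.
  - rewrite Forall_map. eapply Forall_impl; [|exact H2]. cbv beta. intros x Hx.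
    split; [apply Z.div_pos|apply Z.div_lt_upper_bound]; lia.
Qed.

Lemma digits_lt_0 E D : digits_lt 0 E D -> E = 0%Z /\ forall w, wdot w D = 0%Z.
Proof.
  intros [H1 H2]. split; [unfold pow2 in H1; simpl in H1; lia|]. intros w. apply wdot_zeros.
  eapply Forall_impl; [|exact H2]. unfold pow2. simpl. intros; lia.
Qed.

Section Automaton.
Variable s : nat.

Definition cube_twist (σ : state) (V : list bool -> Z) : R :=
  prodR (cube_vertices s) (fun w => rs_twist (fst σ w) (V w + snd σ w)).

Definition digit_sum (σ : state) (e : Z) (d : list Z) (w : list bool) : Z :=
  (e + wdot w d + snd σ w)%Z.

Definition step (σ : state) (e : Z) (d : list Z) : state :=
  (fun w => Z.odd (digit_sum σ e d w), fun w => (digit_sum σ e d w / 2)%Z).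

Definition step_sign (σ : state) (e : Z) (d : list Z) : R :=
  prodR (cube_vertices s) (fun w => if fst σ w && Z.odd (digit_sum σ e d w) then -1 else 1).

Fixpoint path_sign (k : nat) (σ : state) (E : Z) (D : list Z) : R :=
  match k with
  | O => 1
  | S k' => step_sign σ (E mod 2) (map_mod2 D) *
              path_sign k' (step σ (E mod 2) (map_mod2 D)) (E / 2) (map_div2 D)
  end.

Fixpoint path_state (k : nat) (σ : state) (E : Z) (D : list Z) : state :=
  match k with
  | O => σ
  | S k' => path_state k' (step σ (E mod 2) (map_mod2 D)) (E / 2) (map_div2 D)
  end.

Fixpoint transfer (k : nat) (σ : state) (Φ : state -> R) : R :=
  match k with
  | O => Φ σ
  | S k' => sumR (zrange 0 2) (fun e => sumR (zbox s 0 2) (fun d =>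
              step_sign σ e d * transfer k' (step σ e d) Φ))
  end.

Lemma cube_twist_ext σ V V' : (forall w, V w = V' w) -> cube_twist σ V = cube_twist σ V'.
Proof. intros H. apply prodR_ext. intros w _. rewrite H. reflexivity. Qed.

Lemma cube_twist_step σ Y e d :
  cube_twist σ (fun w => 2 * Y w + e + wdot w d)%Z = step_sign σ e d * cube_twist (step σ e d) Y.
Proof.
  unfold cube_twist, step_sign. rewrite <- prodR_mult. apply prodR_ext. intros w _.
  replace (2 * Y w + e + wdot w d + snd σ w)%Z with (2 * Y w + digit_sum σ e d w)%Z
    by (unfold digit_sum; ring).
  apply rs_twist_double_add.
Qed.

Lemma cube_twist_split k : forall σ E D Y, digits_lt k E D ->
  cube_twist σ (fun w => pow2 k * Y w + E + wdot w D)%Z =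
  path_sign k σ E D * cube_twist (path_state k σ E D) Y.
Proof.
  induction k as [|k IH]; intros σ E D Y HB.
  - apply digits_lt_0 in HB as [-> HD]. rewrite Rmult_1_l. apply cube_twist_ext. intros w.
    rewrite HD. change (pow2 0) with 1%Z. lia.
  - cbn [path_sign path_state]. rewrite Rmult_assoc, <- IH, <- cube_twist_step
      by (apply digits_lt_S; exact HB).
    apply cube_twist_ext. intros w.
    rewrite pow2_S, (wdot_mod2_div2 w D). pose proof (Z.div_mod E 2). lia.
Qed.

Lemma digit_sum_step σ E D w :
  (digit_sum σ (E mod 2) (map_mod2 D) w + 2 * (E / 2 + wdot w (map_div2 D)) =
   snd σ w + E + wdot w D)%Z.
Proof. unfold digit_sum. rewrite (wdot_mod2_div2 w D). pose proof (Z.div_mod E 2 ltac:(lia)). lia. Qed.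

Lemma path_state_carry k : forall σ E D, digits_lt k E D -> forall w,
  snd (path_state k σ E D) w = ((snd σ w + E + wdot w D) / pow2 k)%Z.
Proof.
  induction k as [|k IH]; intros σ E D HB w.
  - apply digits_lt_0 in HB as [-> HD]. rewrite HD. change (pow2 0) with 1%Z.
    rewrite Z.div_1_r. simpl. ring.
  - cbn [path_state]. rewrite IH by (apply digits_lt_S; exact HB). cbn [snd step].
    rewrite pow2_S, <- Z.div_div, <- digit_sum_step by (pose proof (pow2_pos k); lia).
    f_equal. rewrite Z.mul_comm, Z.div_add by lia. ring.
Qed.

Lemma path_state_flag k : forall σ E D, digits_lt (S k) E D -> forall w,
  fst (path_state (S k) σ E D) w = Z.odd ((snd σ w + E + wdot w D) / pow2 k).
Proof.
  induction k as [|k IH]; intros σ E D HB w.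
  - cbn [path_state fst step]. change (pow2 0) with 1%Z. rewrite Z.div_1_r, <- digit_sum_step.
    rewrite Z.odd_add_mul_2. reflexivity.
  - change (path_state (S (S k)) σ E D) with
      (path_state (S k) (step σ (E mod 2) (map_mod2 D)) (E / 2) (map_div2 D)).
    rewrite IH by (apply digits_lt_S; exact HB). cbn [snd step].
    rewrite pow2_S, <- Z.div_div, <- digit_sum_step by (pose proof (pow2_pos k); lia).
    f_equal. f_equal. rewrite Z.mul_comm, Z.div_add by lia. ring.
Qed.

Lemma Rabs_path_sign k : forall σ E D, Rabs (path_sign k σ E D) = 1.
Proof.
  induction k as [|k IH]; intros σ E D; [apply Rabs_R1|]. cbn [path_sign].
  rewrite Rabs_mult, IH, Rmult_1_r. apply prodR_abs_one. intros w _.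
  destruct (_ && _); [rewrite Rabs_left by lra; ring|apply Rabs_R1].
Qed.

Lemma transfer_add a : forall b σ Φ, transfer (a + b) σ Φ = transfer a σ (fun τ => transfer b τ Φ).
Proof.
  induction a as [|a IH]; intros b σ Φ; [reflexivity|]. cbn [transfer Nat.add].
  apply sumR_ext; intros e _. apply sumR_ext; intros d _. rewrite IH. reflexivity.
Qed.

Lemma path_join_digits k σ u e v d : (0 <= e < 2)%Z -> length v = length d ->
  Forall (fun x => 0 <= x < 2)%Z d ->
  path_sign (S k) σ (2 * u + e) (join_digits 2 v d) =
    step_sign σ e d * path_sign k (step σ e d) u v /\
  path_state (S k) σ (2 * u + e) (join_digits 2 v d) = path_state k (step σ e d) u v.
Proof.
  intros He Hl Hd. destruct (join_digits_mod_div 2 v d Hl Hd) as [E1 E2].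
  destruct (Z_mul_add_mod_div 2 u e He) as [E3 E4].
  cbn [path_sign path_state]. unfold map_mod2, map_div2. rewrite E1, E2, E3, E4. auto.
Qed.

Lemma transfer_as_sum k : forall σ Φ, transfer k σ Φ =
  sumR (zrange 0 (2 ^ k)) (fun E => sumR (zbox s 0 (2 ^ k)) (fun D =>
     path_sign k σ E D * Φ (path_state k σ E D))).
Proof.
  induction k as [|k IH]; intros σ Φ.
  - cbn. rewrite zbox_1. unfold sumR. simpl. ring.
  - rewrite Nat.pow_succ_r'.
    rewrite <- (Z.mul_0_r (Z.of_nat 2)). rewrite sumR_zrange_join.
    rewrite (sumR_ext _ (fun u => sumR (zrange 0 2) (fun e => sumR (zbox s 0 (2 ^ k)) (fun v =>
        sumR (zbox s 0 2) (fun d => step_sign σ e d * (path_sign k (step σ e d) u v *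
           Φ (path_state k (step σ e d) u v))))))).
    2:{ intros u _. apply sumR_ext. intros e He. apply In_zrange in He.
        rewrite sumR_zbox_join. apply sumR_ext. intros v Hv. apply sumR_ext. intros d Hd.
        apply In_zbox in Hv as [Hv _]. apply In_zbox in Hd as [Hd HdF].
        change (Z.of_nat 2) with 2%Z.
        destruct (path_join_digits k σ u e v d) as [-> ->]; [lia|lia|exact HdF|ring]. }
    cbn [transfer]. rewrite (sumR_swap (zrange 0 (2 ^ k)) (zrange 0 2)). apply sumR_ext. intros e _.
    rewrite (sumR_ext _ (fun u => sumR (zbox s 0 2) (fun d => sumR (zbox s 0 (2 ^ k)) (fun v =>
      step_sign σ e d * (path_sign k (step σ e d) u v * Φ (path_state k (step σ e d) u v))))))
      by (intros; apply sumR_swap).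
    rewrite (sumR_swap (zrange 0 (2 ^ k)) (zbox s 0 2)). apply sumR_ext. intros d _.
    rewrite (sumR_ext _ (fun u => step_sign σ e d * sumR (zbox s 0 (2 ^ k)) (fun v =>
      path_sign k (step σ e d) u v * Φ (path_state k (step σ e d) u v)))) by (intros; apply sumR_scal).
    rewrite sumR_scal, IH. reflexivity.
Qed.

Definition carry_bounded (σ : state) : Prop := forall w, (0 <= snd σ w <= Z.of_nat s)%Z.

Lemma state0_bounded : carry_bounded state0.
Proof. intros w. cbn. lia. Qed.

Lemma path_state_bounded k σ E D : carry_bounded σ -> digits_lt k E D -> length D = s ->
  carry_bounded (path_state k σ E D).
Proof.
  intros Hσ HB Hl w. rewrite path_state_carry by exact HB. pose proof (pow2_pos k).
  destruct HB as [HE HD]. specialize (Hσ w).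
  pose proof (wdot_bounds w D (pow2 k - 1)) as Hw.
  rewrite Hl in Hw. destruct Hw as [Hw0 Hw1]; [eapply Forall_impl; [|exact HD]; cbv beta; intros; lia|].
  split; [apply Z.div_pos; lia|].
  enough ((snd σ w + E + wdot w D) / pow2 k < Z.of_nat s + 1)%Z by lia.
  apply Z.div_lt_upper_bound; nia.
Qed.

End Automaton.

(** * Two cancelling digit blocks *)

Lemma prodR_sign_all_ones k :
  prodR (cube_vertices k) (fun w => if (wdot w (repeat 1%Z k) =? Z.of_nat k)%Z then -1 else 1) = -1.
Proof.
  induction k as [|k IH]; [unfold prodR; simpl; ring|].
  cbn [cube_vertices repeat]. rewrite prodR_app, !prodR_map, prodR_one, Rmult_1_l.
  - etransitivity; [|exact IH]. apply prodR_ext. intros w _. rewrite wdot_cons.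
    destruct (Z.eqb_spec (1 + wdot w (repeat 1%Z k)) (Z.of_nat (S k))),
      (Z.eqb_spec (wdot w (repeat 1%Z k)) (Z.of_nat k)); lia || reflexivity.
  - intros w _. rewrite wdot_cons. pose proof (wdot_repeat_one_bounds w k).
    destruct (Z.eqb_spec (0 + wdot w (repeat 1%Z k)) (Z.of_nat (S k))); lia || reflexivity.
Qed.

(* The cube with base point [2^(s'+1) - s'] and steps [2^(s'+2), 1, ..., 1] ([s'] ones): its
   two faces in the first direction differ by [2^(s'+2)], and adding [2^(s'+2)] flips [r] exactly
   at the top vertex [2^(s'+1)] of the lower face. *)
Definition witness_base (s' : nat) : Z := (2 * pow2 s' - Z.of_nat s')%Z.
Definition witness_steps (s' : nat) : list Z := pow2 (S (S s')) :: repeat 1%Z s'.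

Lemma witness_bounds s' w :
  (0 <= witness_base s' + wdot w (witness_steps s') < pow2 (S (S (S s'))))%Z.
Proof.
  pose proof (pow2_gt s'). unfold witness_base, witness_steps.
  destruct w as [|b w]; [cbn [wdot]|rewrite wdot_cons; pose proof (wdot_repeat_one_bounds w s')];
    rewrite !pow2_S; [lia|destruct b; lia].
Qed.

Lemma cube_twist_witness s' :
  cube_twist (S s') state0 (fun w => witness_base s' + wdot w (witness_steps s'))%Z = -1.
Proof.
  unfold cube_twist. cbn [cube_vertices]. rewrite prodR_app, !prodR_map, <- prodR_mult.
  rewrite <- (prodR_sign_all_ones s'). apply prodR_ext. intros w _.
  unfold state0, witness_steps. cbn [fst snd]. rewrite !wdot_cons.
  pose proof (wdot_repeat_one_bounds w s'). pose proof (pow2_gt s').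
  set (c := wdot w (repeat 1%Z s')) in *. set (y := (witness_base s' + (0 + c))%Z).
  assert (Hy : (0 <= y < pow2 (S (S s')))%Z) by (unfold y, witness_base; rewrite !pow2_S; lia).
  replace (witness_base s' + (pow2 (S (S s')) + c) + 0)%Z with (y + pow2 (S (S s')))%Z
    by (unfold y; ring).
  rewrite Z.add_0_r. unfold rs_twist. cbn [andb].
  destruct (Z.ltb_spec y 0), (Z.ltb_spec (y + pow2 (S (S s'))) 0); try lia.
  rewrite rsZ_add_pow2 by exact Hy.
  replace (pow2 (S s') <=? y)%Z with (c =? Z.of_nat s')%Z.
  - rewrite Rmult_comm, Rmult_assoc, rsZ_mul_self. ring.
  - unfold y, witness_base. rewrite pow2_S.
    destruct (Z.eqb_spec c (Z.of_nat s')), (Z.leb_spec (2 * pow2 s') (2 * pow2 s' - Z.of_nat s' + (0 + c)));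
      lia || reflexivity.
Qed.

Definition zeros_like (D : list Z) : list Z := map (fun _ => 0%Z) D.
Definition scale_list (c : Z) (D : list Z) : list Z := map (fun x => c * x)%Z D.

Lemma wdot_zeros_like w D : wdot w (zeros_like D) = 0%Z.
Proof.
  apply wdot_zeros. apply Forall_forall. intros x Hx. apply in_map_iff in Hx as [? [<- _]]. reflexivity.
Qed.

Lemma digits_lt_zeros k D : digits_lt k 0 (zeros_like D).
Proof.
  pose proof (pow2_pos k). split; [lia|]. apply Forall_forall. intros x Hx.
  apply in_map_iff in Hx as [? [<- _]]. lia.
Qed.

Lemma digits_lt_scale m k E D :
  digits_lt k E D -> digits_lt (m + k) (pow2 m * E) (scale_list (pow2 m) D).
Proof.
  intros [HE HD]. pose proof (pow2_pos m). unfold digits_lt. rewrite pow2_add.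
  split; [nia|]. unfold scale_list. rewrite Forall_map. eapply Forall_impl; [|exact HD]. cbv beta. nia.
Qed.

Lemma In_digit_box s k E D :
  In (E, D) (list_prod (zrange 0 (2 ^ k)) (zbox s 0 (2 ^ k))) <-> digits_lt k E D /\ length D = s.
Proof.
  rewrite in_prod_iff, In_zrange, In_zbox. unfold digits_lt. rewrite <- pow2_nat, !Z.add_0_l.
  tauto.
Qed.

Section Paths.
Variable s : nat.

Lemma path_shift m : forall M σ E D,
  path_sign s (m + M) σ (pow2 m * E) (scale_list (pow2 m) D) =
    path_sign s m σ 0 (zeros_like D) * path_sign s M (path_state m σ 0 (zeros_like D)) E D /\
  path_state (m + M) σ (pow2 m * E) (scale_list (pow2 m) D) =
    path_state M (path_state m σ 0 (zeros_like D)) E D.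
Proof.
  induction m as [|m IH]; intros M σ E D.
  - change (pow2 0) with 1%Z. rewrite Z.mul_1_l.
    replace (scale_list 1 D) with D by (unfold scale_list; rewrite <- (map_id D) at 1;
      apply map_ext; intros; ring).
    split; cbn; [ring|reflexivity].
  - assert (Hdbl : forall x, ((pow2 (S m) * x) mod 2 = 0 /\ (pow2 (S m) * x) / 2 = pow2 m * x)%Z).
    { intros x. rewrite pow2_S, <- Z.mul_assoc, Z.mul_comm, Z.mod_mul, Z.div_mul by lia. auto. }
    assert (Hmod : map_mod2 (scale_list (pow2 (S m)) D) = zeros_like D).
    { unfold map_mod2, scale_list, zeros_like. rewrite map_map. apply map_ext. apply Hdbl. }
    assert (Hdiv : map_div2 (scale_list (pow2 (S m)) D) = scale_list (pow2 m) D).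
    { unfold map_div2, scale_list. rewrite map_map. apply map_ext. apply Hdbl. }
    assert (Hzeros : map_mod2 (zeros_like D) = zeros_like D /\ map_div2 (zeros_like D) = zeros_like D).
    { unfold map_mod2, map_div2, zeros_like. rewrite !map_map. auto. }
    rewrite Nat.add_succ_l. cbn [path_sign path_state].
    destruct (Hdbl E) as [-> ->]. destruct Hzeros as [-> ->]. rewrite Hmod, Hdiv, Zmod_0_l, Zdiv_0_l.
    destruct (IH M (step σ 0 (zeros_like D)) E D) as [-> ->]. split; [ring|reflexivity].
Qed.

Lemma path_state_eq_state0 k σ E D : digits_lt (S k) E D ->
  (forall w, 0 <= snd σ w + E + wdot w D < pow2 k)%Z -> path_state (S k) σ E D = state0.
Proof.
  intros HB H. pose proof (pow2_pos k). apply state_eq0; intros w.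
  - rewrite path_state_flag, Z.div_small by auto. reflexivity.
  - rewrite path_state_carry, pow2_S by exact HB. apply Z.div_small. specialize (H w). lia.
Qed.

Lemma cube_twist_state0_zero : cube_twist s state0 (fun _ => 0%Z) = 1.
Proof. apply prodR_one. intros w _. reflexivity. Qed.

Lemma path_sign_state0 k E D : digits_lt k E D -> path_state k state0 E D = state0 ->
  path_sign s k state0 E D = cube_twist s state0 (fun w => E + wdot w D)%Z.
Proof.
  intros HB Hend. pose proof (cube_twist_split s k state0 E D (fun _ => 0%Z) HB) as H.
  rewrite Hend, cube_twist_state0_zero, Rmult_1_r in H. rewrite <- H.
  apply cube_twist_ext. intros; ring.
Qed.

End Paths.

Lemma path_state_zeros k σ D : (forall w, 0 <= snd σ w < pow2 k)%Z ->
  path_state (S k) σ 0 (zeros_like D) = state0.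
Proof.
  intros Hσ. apply path_state_eq_state0; [apply digits_lt_zeros|].
  intros w. rewrite wdot_zeros_like. specialize (Hσ w). lia.
Qed.

Lemma witness_digits s' : digits_lt (s' + 4) (witness_base s') (witness_steps s').
Proof.
  pose proof (witness_bounds s' []) as Hw. cbn [wdot] in Hw. pose proof (pow2_pos s').
  replace (s' + 4)%nat with (S (S (S (S s')))) by lia. split; [rewrite pow2_S; lia|].
  constructor; [rewrite !pow2_S; lia|].
  apply Forall_forall. intros x Hx. apply repeat_spec in Hx as ->.
  pose proof (pow2_gt (S (S (S (S s'))))). lia.
Qed.

Lemma path_state_witness s' : path_state (s' + 4) state0 (witness_base s') (witness_steps s') = state0.
Proof.
  pose proof (witness_digits s') as HB. replace (s' + 4)%nat with (S (S (S (S s')))) in * by lia.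
  apply path_state_eq_state0; [exact HB|]. intros w. pose proof (witness_bounds s' w). cbn [snd state0]. lia.
Qed.

Lemma path_sign_witness s' :
  path_sign (S s') (s' + 4) state0 (witness_base s') (witness_steps s') = -1.
Proof.
  rewrite path_sign_state0 by apply witness_digits || apply path_state_witness.
  apply cube_twist_witness.
Qed.

Lemma path_sign_zeros s k D : path_sign s (S k) state0 0 (zeros_like D) = 1.
Proof.
  pose proof (pow2_pos k).
  rewrite path_sign_state0 by (apply digits_lt_zeros || apply path_state_zeros; intros; cbn; lia).
  rewrite <- (cube_twist_state0_zero s). apply cube_twist_ext. intros w. rewrite wdot_zeros_like. ring.
Qed.

Lemma zeros_like_idem D : zeros_like (zeros_like D) = zeros_like D.
Proof. unfold zeros_like. rewrite map_map. reflexivity. Qed.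

Lemma scale_list_zeros c D : scale_list c (zeros_like D) = zeros_like D.
Proof. unfold scale_list, zeros_like. rewrite map_map. apply map_ext. intros; ring. Qed.

(* Each block of digits consists of [s' + 3] digits that flush any bounded carry, followed by
   the [s' + 4] digits of the witness cube. *)
Definition block_len (s' : nat) : nat := (S (S (S s')) + (s' + 4))%nat.
Definition block_paths (s' : nat) : nat := (2 ^ (block_len s' * S (S s')))%nat.

Lemma length_digit_box s k :
  length (list_prod (zrange 0 (2 ^ k)) (zbox s 0 (2 ^ k))) = (2 ^ (k * S s))%nat.
Proof.
  rewrite length_prod, length_zrange, length_zbox, <- Nat.pow_mul_r, <- Nat.pow_add_r.
  f_equal. lia.
Qed.

Section Contraction.
Variable s' : nat.

Let flush : nat := S (S (S s')).
Let E1 : Z := (pow2 flush * witness_base s')%Z.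
Let D1 : list Z := scale_list (pow2 flush) (witness_steps s').
Let D0 : list Z := zeros_like (witness_steps s').

Lemma block_paths_cancel σ : carry_bounded (S s') σ ->
  path_state (block_len s') σ E1 D1 = state0 /\ path_state (block_len s') σ 0 D0 = state0 /\
  path_sign (S s') (block_len s') σ E1 D1 + path_sign (S s') (block_len s') σ 0 D0 = 0.
Proof.
  intros Hσ.
  assert (Hflush : path_state flush σ 0 D0 = state0).
  { apply path_state_zeros. intros w. specialize (Hσ w). pose proof (pow2_gt (S (S s'))). lia. }
  destruct (path_shift (S s') flush (s' + 4) σ (witness_base s') (witness_steps s')) as [S1 S2].
  destruct (path_shift (S s') flush (s' + 4) σ 0 D0) as [T1 T2].
  unfold D0 in T1, T2. rewrite Z.mul_0_r, scale_list_zeros, zeros_like_idem in T1, T2.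
  fold D0 in Hflush, S1, S2, T1, T2. rewrite Hflush in S1, S2, T1, T2.
  unfold block_len, E1, D1. fold flush. rewrite S1, S2, T1, T2, path_state_witness, path_sign_witness.
  unfold D0. replace (s' + 4)%nat with (S (s' + 3)) by lia.
  rewrite path_state_zeros, path_sign_zeros by (intros; cbn; pose proof (pow2_pos (s' + 3)); lia).
  repeat split. ring.
Qed.

Lemma transfer_block_contract σ Ψ B : carry_bounded (S s') σ ->
  (forall τ, carry_bounded (S s') τ -> Rabs (Ψ τ) <= B) ->
  Rabs (transfer (S s') (block_len s') σ Ψ) <= (INR (block_paths s') - 2) * B.
Proof.
  intros Hσ HΨ. destruct (block_paths_cancel σ Hσ) as (End1 & End0 & Cancel).
  rewrite transfer_as_sum.
  set (f := fun p : Z * list Z =>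
    path_sign (S s') (block_len s') σ (fst p) (snd p) * Ψ (path_state (block_len s') σ (fst p) (snd p))).
  change (Rabs (sumR (zrange 0 (2 ^ block_len s')) (fun E =>
    sumR (zbox (S s') 0 (2 ^ block_len s')) (fun D => f (E, D)))) <= (INR (block_paths s') - 2) * B).
  rewrite <- sumR_list_prod. unfold block_paths. rewrite <- length_digit_box.
  apply (sumR_abs_cancel_pair f _ (E1, D1) (0%Z, D0)).
  - intros [E D] HED. apply In_digit_box in HED as [HB Hl]. unfold f. cbn [fst snd].
    rewrite Rabs_mult, Rabs_path_sign, Rmult_1_l. apply HΨ, path_state_bounded; assumption.
  - apply In_digit_box. unfold block_len. split; [apply digits_lt_scale, witness_digits|].
    unfold D1, scale_list, witness_steps. rewrite length_map. cbn. rewrite repeat_length. reflexivity.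
  - apply In_digit_box. split; [apply digits_lt_zeros|].
    unfold D0, zeros_like, witness_steps. rewrite length_map. cbn. rewrite repeat_length. reflexivity.
  - intros Heq. apply (f_equal fst) in Heq. cbn in Heq. unfold E1, witness_base in Heq.
    pose proof (pow2_pos flush). pose proof (pow2_gt s'). nia.
  - unfold f. cbn [fst snd]. rewrite End1, End0, <- Rmult_plus_distr_r, Cancel. ring.
Qed.

End Contraction.

(** * Exponential decay of the transfer sums *)

Lemma transfer_blocks_bound s' (Φ : state -> R) : (forall τ, Rabs (Φ τ) <= 1) ->
  forall j σ, carry_bounded (S s') σ ->
  Rabs (transfer (S s') (j * block_len s') σ Φ) <= (INR (block_paths s') - 2) ^ j.
Proof.
  intros HΦ j. induction j as [|j IH]; intros σ Hσ; [apply HΦ|].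
  rewrite Nat.mul_succ_l, Nat.add_comm, transfer_add. cbn [pow].
  apply transfer_block_contract; auto.
Qed.

Lemma pow_one_minus_le n x : 0 <= x <= 1 -> (1 - x) ^ n * (1 + INR n * x) <= 1.
Proof.
  intros Hx. induction n as [|n IH]; [simpl; lra|].
  rewrite S_INR. cbn [pow].
  assert (H0 : 0 <= (1 - x) ^ n) by (apply pow_le; lra).
  pose proof (pos_INR n).
  assert (0 <= (1 - x) ^ n * (x * x * (INR n + 1))) by (apply Rmult_le_pos; [|apply Rmult_le_pos]; nra).
  replace ((1 - x) * (1 - x) ^ n * (1 + (INR n + 1) * x)) with
    ((1 - x) ^ n * (1 + INR n * x) - (1 - x) ^ n * (x * x * (INR n + 1))) by ring.
  lra.
Qed.

Lemma pow_sub2_le_half (n : nat) : (2 <= n)%nat -> (INR n - 2) ^ n <= INR n ^ n / 2.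
Proof.
  intros Hn. assert (HP : 2 <= INR n) by (apply (le_INR 2); lia).
  assert (Hx : 0 <= 2 / INR n <= 1).
  { split; [apply Rmult_le_pos; [lra|apply Rlt_le, Rinv_0_lt_compat; lra]|].
    apply (Rmult_le_reg_r (INR n)); [lra|]. unfold Rdiv. rewrite Rmult_assoc, Rinv_l; lra. }
  pose proof (pow_one_minus_le n (2 / INR n) Hx) as H.
  replace (1 + INR n * (2 / INR n)) with 3 in H by (field; lra).
  replace (INR n - 2) with (INR n * (1 - 2 / INR n)) by (field; lra).
  rewrite Rpow_mult_distr.
  assert (0 < INR n ^ n) by (apply pow_lt; lra).
  assert (0 <= (1 - 2 / INR n) ^ n) by (apply pow_le; lra).
  nra.
Qed.

Lemma block_paths_ge2 s' : (2 <= block_paths s')%nat.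
Proof.
  unfold block_paths, block_len. rewrite <- (Nat.pow_1_r 2) at 1.
  apply Nat.pow_le_mono_r; lia.
Qed.

(* Since [(1 - 2 / P) ^ P <= 1 / 2], a run of [P = block_paths] blocks gains a factor [1/2]. *)
Definition block_period (s' : nat) : nat := (block_paths s' * block_len s')%nat.

Lemma transfer_decay s' (Φ : state -> R) : (forall τ, Rabs (Φ τ) <= 1) ->
  forall j, Rabs (transfer (S s') (j * block_period s') state0 Φ) <=
    2 ^ (S (S s') * (j * block_period s')) * (/ 2) ^ j.
Proof.
  intros HΦ j. unfold block_period. remember (block_paths s') as P eqn:HPdef.
  replace (j * (P * block_len s'))%nat with ((P * j) * block_len s')%nat by ring.
  eapply Rle_trans; [apply transfer_blocks_bound; [exact HΦ|apply state0_bounded]|]. rewrite <- HPdef.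
  assert (HP2 : (2 <= P)%nat) by (subst; apply block_paths_ge2).
  assert (HP : 2 <= INR P) by (apply (le_INR 2), HP2).
  assert (HPpow : INR P ^ P = 2 ^ (block_len s' * S (S s') * P)).
  { rewrite HPdef at 1. unfold block_paths. rewrite pow_INR, <- pow_mult. reflexivity. }
  rewrite pow_mult. eapply Rle_trans.
  - apply pow_incr. split; [apply pow_le; lra|apply pow_sub2_le_half, HP2].
  - unfold Rdiv. rewrite HPpow, Rpow_mult_distr, <- pow_mult.
    replace (block_len s' * S (S s') * P * j)%nat with (S (S s') * (P * j * block_len s'))%nat by ring.
    lra.
Qed.

(** * Truncation at [N] *)

Lemma prodR_if_forallb {A} (P : A -> bool) (f : A -> R) l :
  prodR l (fun x => if P x then f x else 0) = if forallb P l then prodR l f else 0.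
Proof.
  induction l as [|a l IH]; [reflexivity|].
  rewrite !prodR_cons, IH. cbn [forallb]. destruct (P a), (forallb P l); cbn; ring.
Qed.

Lemma Rabs_indicator_mul_le x (b : bool) : Rabs x <= 1 -> Rabs (x * (if b then 1 else 0)) <= 1.
Proof. intros H. destruct b; rewrite ?Rmult_1_r, ?Rmult_0_r, ?Rabs_R0; lra. Qed.

Lemma ltb_cut_digits P N x z l : (0 < P)%Z -> (0 <= l < P)%Z -> (x = P * z + l)%Z ->
  ~ (P * (N / P) <= x < P * (N / P) + P)%Z -> (x <? N)%Z = (z <? N / P)%Z.
Proof.
  intros HP Hl Hx Hcut.
  pose proof (Z.div_mod N P ltac:(lia)). pose proof (Z.mod_pos_bound N P HP).
  destruct (Z.lt_total z (N / P)) as [Hz|[Hz|Hz]].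
  - assert (P * z <= P * (N / P) - P)%Z by nia.
    destruct (Z.ltb_spec x N), (Z.ltb_spec z (N / P)); lia.
  - subst z. exfalso. lia.
  - assert (P * z >= P * (N / P) + P)%Z by nia.
    destruct (Z.ltb_spec x N), (Z.ltb_spec z (N / P)); lia.
Qed.

Section Truncation.
Variables s N : nat.

Definition cube_term (n : Z) (h : list Z) : R :=
  prodR (cube_vertices s) (fun w =>
    rs_twist false (n + wdot w h) * (if (n + wdot w h <? Z.of_nat N)%Z then 1 else 0)).

Lemma cube_term_eq n h : cube_term n h =
  if cube_in s N n h then cube_product s rsZ n h else 0.
Proof.
  change (cube_product s rsZ n h) with (prodR (cube_vertices s) (fun w => rsZ (n + wdot w h))).
  unfold cube_term, cube_in. rewrite <- prodR_if_forallb. apply prodR_ext.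
  intros w _. unfold rs_twist, in_interval.
  destruct (Z.ltb_spec (n + wdot w h) 0), (Z.leb_spec 0 (n + wdot w h)),
    (Z.ltb_spec (n + wdot w h) (Z.of_nat N)); cbn; try lia; ring.
Qed.

Lemma gowers_numerator_eq :
  fold_right Rplus 0 (map (fun p => cube_product s rsZ (fst p) (snd p)) (gowers_configs s N)) =
  sumR (zrange 0 N) (fun n => sumR (zbox s (1 - Z.of_nat N) (2 * N - 1)) (cube_term n)).
Proof.
  change (fold_right Rplus 0 _)
    with (sumR (gowers_configs s N) (fun p => cube_product s rsZ (fst p) (snd p))).
  unfold gowers_configs. rewrite sumR_filter, sumR_list_prod.
  apply sumR_ext; intros n _. apply sumR_ext; intros h _. symmetry. apply cube_term_eq.
Qed.

Lemma cube_term_outside_n n h : length h = s -> ~ (0 <= n < Z.of_nat N)%Z -> cube_term n h = 0.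
Proof.
  intros Hl Hn. apply (prodR_zero _ _ (repeat false s)); [apply In_cube_vertices, repeat_length|].
  rewrite wdot_falses. unfold rs_twist.
  destruct (Z.ltb_spec (n + 0) 0), (Z.ltb_spec (n + 0) (Z.of_nat N)); cbn; try lia; ring.
Qed.

Lemma cube_term_outside_h n h : length h = s ->
  ~ Forall (fun x => 1 - Z.of_nat N <= x < Z.of_nat N)%Z h -> cube_term n h = 0.
Proof.
  intros Hl Hh.
  destruct (Z.leb_spec 0 n), (Z.ltb_spec n (Z.of_nat N)); try (apply cube_term_outside_n; auto; lia).
  apply neg_Forall_Exists_neg, Exists_exists in Hh as [x [Hx Hout]];
    [|intros y; destruct (Z_le_dec (1 - Z.of_nat N) y), (Z_lt_dec y (Z.of_nat N));
      [left; lia|right; lia..]].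
  destruct (in_split _ _ Hx) as [h1 [h2 ->]].
  apply (prodR_zero _ _ (repeat false (length h1) ++ true :: repeat false (length h2))).
  - apply In_cube_vertices. rewrite <- Hl, !length_app. cbn. rewrite !repeat_length. reflexivity.
  - rewrite wdot_unit. unfold rs_twist.
    destruct (Z.ltb_spec (n + x) 0), (Z.ltb_spec (n + x) (Z.of_nat N)); cbn; try lia; ring.
Qed.

Lemma gowers_numerator_aligned (P A1 : nat) : (1 <= N)%nat -> (N <= P * A1)%nat ->
  sumR (zrange 0 N) (fun n => sumR (zbox s (1 - Z.of_nat N) (2 * N - 1)) (cube_term n)) =
  sumR (zrange 0 (P * A1)) (fun n => sumR (zbox s (Z.of_nat P * - Z.of_nat A1) (P * (2 * A1))) (cube_term n)).
Proof.
  intros HN HPA.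
  rewrite (sumR_ext _ (fun n => sumR (zbox s (Z.of_nat P * - Z.of_nat A1) (P * (2 * A1))) (cube_term n))).
  - apply sumR_zrange_ext; try lia.
    intros x Hx. apply sumR_zero. intros h Hh. apply In_zbox in Hh as [Hl _].
    apply cube_term_outside_n; auto; lia.
  - intros n _. apply sumR_zbox_ext; try lia.
    intros h Hl Hn. apply cube_term_outside_h; auto.
    replace (1 - Z.of_nat N + Z.of_nat (2 * N - 1))%Z with (Z.of_nat N) in Hn by lia. exact Hn.
Qed.

Definition truncated_twist (Nk : Z) (Y : list bool -> Z) (τ : state) : R :=
  prodR (cube_vertices s) (fun w =>
    rs_twist (fst τ w) (Y w + snd τ w) * (if (Y w + snd τ w <? Nk)%Z then 1 else 0)).

Lemma Rabs_truncated_twist_le Nk Y τ : Rabs (truncated_twist Nk Y τ) <= 1.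
Proof. apply prodR_abs_le1. intros w _. apply Rabs_indicator_mul_le, Rabs_rs_twist_le. Qed.

Lemma Rabs_cube_term_le n h : Rabs (cube_term n h) <= 1.
Proof. apply prodR_abs_le1. intros w _. apply Rabs_indicator_mul_le, Rabs_rs_twist_le. Qed.

(* [cube_term] computed by the automaton after reading the [k] lowest digits of [n] and [h],
   with the cut-off [N] replaced by [N / 2^k] on the remaining high parts. *)
Definition cube_term_approx (k : nat) (n : Z) (h : list Z) : R :=
  let E := (n mod pow2 k)%Z in
  let D := map (fun x => x mod pow2 k)%Z h in
  path_sign s k state0 E D *
  truncated_twist (Z.of_nat N / pow2 k) (fun w => n / pow2 k + wdot w (map (fun x => x / pow2 k) h))%Z
    (path_state k state0 E D).

Definition near_cut (k : nat) (n : Z) (h : list Z) (w : list bool) : bool :=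
  let c := (pow2 k * (Z.of_nat N / pow2 k))%Z in
  ((c <=? n + wdot w h) && (n + wdot w h <? c + pow2 k))%Z.

Lemma cube_term_approx_exact k n h :
  (forall w, In w (cube_vertices s) -> near_cut k n h w = false) -> cube_term n h = cube_term_approx k n h.
Proof.
  intros Hfar. unfold cube_term_approx.
  set (Pz := pow2 k). pose proof (pow2_pos k) as HPz. fold Pz in HPz.
  set (E := (n mod Pz)%Z). set (D := map (fun x => x mod Pz)%Z h).
  set (Y := fun w => (n / Pz + wdot w (map (fun x => x / Pz) h))%Z).
  set (τ := path_state k state0 E D).
  assert (HB : digits_lt k E D).
  { split; [apply Z.mod_pos_bound; lia|]. apply Forall_forall. intros x Hx.
    apply in_map_iff in Hx as [y [<- _]]. apply Z.mod_pos_bound; lia. }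
  assert (Hx : forall w, (n + wdot w h = Pz * Y w + E + wdot w D)%Z).
  { intros w. unfold Y, E, D. rewrite (wdot_split (fun x => x mod Pz) (fun x => x / Pz) Pz w h)%Z.
    - pose proof (Z.div_mod n Pz ltac:(lia)). lia.
    - intros x. pose proof (Z.div_mod x Pz ltac:(lia)). lia. }
  unfold cube_term, truncated_twist. rewrite !prodR_mult, <- Rmult_assoc.
  change (prodR (cube_vertices s) (fun w => rs_twist (fst τ w) (Y w + snd τ w))) with (cube_twist s τ Y).
  pose proof (cube_twist_split s k state0 E D Y HB) as Hsplit. fold Pz τ in Hsplit.
  rewrite <- Hsplit. f_equal.
  - apply prodR_ext. intros w _. rewrite Hx. cbn. rewrite Z.add_0_r. reflexivity.
  - apply prodR_ext. intros w Hw. specialize (Hfar w Hw). unfold near_cut in Hfar. fold Pz in Hfar.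
    rewrite (ltb_cut_digits Pz (Z.of_nat N) _ (Y w + snd τ w) ((E + wdot w D) mod Pz)); [reflexivity|lia|..].
    + apply Z.mod_pos_bound. lia.
    + unfold τ. rewrite path_state_carry by exact HB. cbn [snd state0]. fold Pz. rewrite Z.add_0_l.
      rewrite Hx. pose proof (Z.div_mod (E + wdot w D) Pz ltac:(lia)). lia.
    + destruct (Z.leb_spec (Pz * (Z.of_nat N / Pz)) (n + wdot w h)),
        (Z.ltb_spec (n + wdot w h) (Pz * (Z.of_nat N / Pz) + Pz)); cbn in Hfar; try discriminate; lia.
Qed.

Lemma cube_term_approx_error k n h : Rabs (cube_term n h - cube_term_approx k n h) <=
  2 * sumR (cube_vertices s) (fun w => if near_cut k n h w then 1 else 0).
Proof.
  assert (Hnn : forall w, 0 <= (if near_cut k n h w then 1 else 0)) by (intros; destruct near_cut; lra).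
  destruct (existsb (near_cut k n h) (cube_vertices s)) eqn:Hex.
  - apply existsb_exists in Hex as [w [Hw Hcut]].
    pose proof (sumR_ge_term _ _ w (fun y _ => Hnn y) Hw) as Hge. cbv beta in Hge. rewrite Hcut in Hge.
    assert (Happrox : Rabs (cube_term_approx k n h) <= 1).
    { unfold cube_term_approx. rewrite Rabs_mult, Rabs_path_sign, Rmult_1_l. apply Rabs_truncated_twist_le. }
    pose proof (Rabs_cube_term_le n h). pose proof (Rabs_triang (cube_term n h) (- cube_term_approx k n h)).
    rewrite Rabs_Ropp in *. unfold Rminus. lra.
  - rewrite (cube_term_approx_exact k n h), Rminus_diag, Rabs_R0.
    + pose proof (sumR_nonneg _ (cube_vertices s) (fun y _ => Hnn y)). lra.
    + intros w Hw. destruct (near_cut k n h w) eqn:Hcut; [|reflexivity].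
      enough (existsb (near_cut k n h) (cube_vertices s) = true) by congruence.
      apply existsb_exists. eauto.
Qed.

End Truncation.

(** * The power saving *)

Lemma sumR_zrange_window_le lo len a b c :
  sumR (zrange lo len) (fun n => if ((a <=? n + c) && (n + c <? b))%Z then 1 else 0)
   <= IZR (Z.max 0 (b - Z.max a (lo + c))).
Proof.
  revert lo; induction len as [|len IH]; intros lo; [unfold sumR; simpl; apply IZR_le; lia|].
  rewrite zrange_cons, sumR_cons. specialize (IH (lo + 1)%Z).
  set (rest := Z.max 0 (b - Z.max a (lo + 1 + c))) in IH.
  destruct (Z.leb_spec a (lo + c)), (Z.ltb_spec (lo + c) b); cbn [andb];
    [assert (Hz : (1 + rest <= Z.max 0 (b - Z.max a (lo + c)))%Z) by (unfold rest; lia)|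
     assert (Hz : (rest <= Z.max 0 (b - Z.max a (lo + c)))%Z) by (unfold rest; lia)..];
    apply IZR_le in Hz; rewrite ?plus_IZR in Hz; lra.
Qed.

Section Sums.
Variables s N : nat.

Lemma approx_error_sum k lo len (H : list (list Z)) :
  sumR (zrange lo len) (fun n => sumR H (fun h => Rabs (cube_term s N n h - cube_term_approx s N k n h)))
  <= 2 * (INR (length H) * (2 ^ s * IZR (pow2 k))).
Proof.
  eapply Rle_trans.
  { apply sumR_le. intros n _. apply sumR_le. intros h _. apply cube_term_approx_error. }
  rewrite (sumR_ext _ (fun n => 2 * sumR H (fun h =>
    sumR (cube_vertices s) (fun w => if near_cut N k n h w then 1 else 0)))) by (intros; apply sumR_scal).
  rewrite sumR_scal. apply Rmult_le_compat_l; [lra|].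
  rewrite sumR_swap, <- sumR_const. apply sumR_le. intros h _.
  replace (2 ^ s) with (INR (length (cube_vertices s)))
    by (rewrite length_cube_vertices, pow_INR; reflexivity).
  rewrite sumR_swap, <- sumR_const.
  apply sumR_le. intros w _. unfold near_cut.
  eapply Rle_trans; [apply sumR_zrange_window_le|]. apply IZR_le. pose proof (pow2_pos k). lia.
Qed.

Lemma cube_term_approx_join k u e v d : (0 <= e < pow2 k)%Z -> length v = length d ->
  Forall (fun x => 0 <= x < pow2 k)%Z d ->
  cube_term_approx s N k (pow2 k * u + e) (join_digits (pow2 k) v d) =
  path_sign s k state0 e d *
  truncated_twist s (Z.of_nat N / pow2 k) (fun w => u + wdot w v)%Z (path_state k state0 e d).
Proof.
  intros He Hl Hd. destruct (join_digits_mod_div (pow2 k) v d Hl Hd) as [E1 E2].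
  destruct (Z_mul_add_mod_div (pow2 k) u e He) as [E3 E4].
  unfold cube_term_approx. rewrite E1, E2, E3, E4. reflexivity.
Qed.

(* Splitting [n] and [h] into [k] low digits and high parts turns the sum of the approximations
   into transfer sums, one for each value of the high parts. *)
Lemma approx_sum_bound k (A1 : nat) Bw :
  (forall Φ, (forall τ, Rabs (Φ τ) <= 1) -> Rabs (transfer s k state0 Φ) <= Bw) ->
  Rabs (sumR (zrange 0 (2 ^ k * A1)) (fun n =>
     sumR (zbox s (Z.of_nat (2 ^ k) * - Z.of_nat A1) (2 ^ k * (2 * A1))) (cube_term_approx s N k n)))
  <= INR A1 * (INR ((2 * A1) ^ s) * Bw).
Proof.
  intros Htransfer.
  rewrite <- (Z.mul_0_r (Z.of_nat (2 ^ k))) at 1. rewrite sumR_zrange_join.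
  rewrite (sumR_ext _ (fun u => sumR (zbox s (- Z.of_nat A1) (2 * A1)) (fun v =>
      transfer s k state0 (truncated_twist s (Z.of_nat N / pow2 k) (fun w => u + wdot w v)%Z)))).
  - eapply Rle_trans; [apply (sumR_abs_le _ _ (INR ((2 * A1) ^ s) * Bw))|].
    + intros u _. eapply Rle_trans; [apply (sumR_abs_le _ _ Bw)|rewrite length_zbox; lra].
      intros v _. apply Htransfer. intros τ. apply Rabs_truncated_twist_le.
    + rewrite length_zrange. lra.
  - intros u _. rewrite (sumR_ext _ (fun e => sumR (zbox s (- Z.of_nat A1) (2 * A1)) (fun v =>
      sumR (zbox s 0 (2 ^ k)) (fun d => cube_term_approx s N k (Z.of_nat (2 ^ k) * u + e)
        (join_digits (Z.of_nat (2 ^ k)) v d))))) by (intros; apply sumR_zbox_join).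
    rewrite sumR_swap. apply sumR_ext. intros v Hv. rewrite transfer_as_sum.
    apply sumR_ext. intros e He. apply sumR_ext. intros d Hd.
    apply In_zrange in He. apply In_zbox in Hv as [Hv _]. apply In_zbox in Hd as [Hd HdF].
    rewrite <- pow2_nat in *. apply cube_term_approx_join; [lia|lia|exact HdF].
Qed.

End Sums.

Lemma main_plus_error_le (Nr Pr A1 q : R) (s j k : nat) :
  1 <= Pr -> Pr * Pr <= Nr -> Pr = 2 ^ k -> q = (/ 2) ^ j -> (j <= k)%nat -> 0 <= A1 -> Pr * A1 <= 2 * Nr ->
  A1 * ((2 * A1) ^ s * (2 ^ (S s * k) * q)) + 2 * ((Pr * (2 * A1)) ^ s * (2 ^ s * Pr))
  <= (2 * 4 ^ s + 2 * 8 ^ s) * Nr ^ S s * q.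
Proof.
  intros HP HPP HPk Hq Hjk HA HPA.
  assert (Hq0 : 0 < q) by (rewrite Hq; apply pow_lt; lra).
  assert (HPq : Pr * q >= 1).
  { rewrite HPk, Hq, <- (Nat.sub_add j k Hjk), pow_add, Rmult_assoc, <- Rpow_mult_distr, Rinv_r,
      pow1, Rmult_1_r by lra.
    pose proof (pow_R1_Rle 2 (k - j) ltac:(lra)). lra. }
  assert (HPA4 : 0 <= 2 * (Pr * A1) <= 4 * Nr) by nra.
  assert (H4 : (2 * (Pr * A1)) ^ s <= 4 ^ s * Nr ^ s)
    by (rewrite <- Rpow_mult_distr; apply pow_incr; exact HPA4).
  assert (Hpow : 0 <= (2 * (Pr * A1)) ^ s) by (apply pow_le; lra).
  assert (Hmain : A1 * ((2 * A1) ^ s * (2 ^ (S s * k) * q)) <= 2 * 4 ^ s * Nr ^ S s * q).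
  { replace (2 ^ (S s * k)) with (Pr ^ S s) by (rewrite HPk, <- !pow_mult; f_equal; lia).
    replace (A1 * ((2 * A1) ^ s * (Pr ^ S s * q))) with ((Pr * A1) * (2 * (Pr * A1)) ^ s * q)
      by (cbn [pow]; rewrite !Rpow_mult_distr; ring).
    cbn [pow]. apply Rmult_le_compat_r; [lra|].
    replace (2 * 4 ^ s * (Nr * Nr ^ s)) with ((2 * Nr) * (4 ^ s * Nr ^ s)) by ring.
    apply Rmult_le_compat; nra. }
  assert (Herr : 2 * ((Pr * (2 * A1)) ^ s * (2 ^ s * Pr)) <= 2 * 8 ^ s * Nr ^ S s * q).
  { replace (Pr * (2 * A1)) with (2 * (Pr * A1)) by ring.
    replace (8 ^ s) with (2 ^ s * 4 ^ s) by (rewrite <- Rpow_mult_distr; f_equal; ring).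
    pose proof (pow_lt 2 s ltac:(lra)). cbn [pow].
    assert (Pr <= Nr * q) by nra.
    replace (2 * (2 ^ s * 4 ^ s) * (Nr * Nr ^ s) * q)
      with (2 * ((4 ^ s * Nr ^ s) * (2 ^ s * (Nr * q)))) by ring.
    apply Rmult_le_compat_l; [lra|]. apply Rmult_le_compat; nra. }
  lra.
Qed.

Lemma INR_div_ge_half N d : (1 <= d)%nat -> (2 * d <= N)%nat -> INR N / (2 * INR d) <= INR (N / d).
Proof.
  intros Hd HN. pose proof (Nat.div_mod N d ltac:(lia)). pose proof (Nat.mod_upper_bound N d ltac:(lia)).
  assert (Hq : (1 <= N / d)%nat) by (apply Nat.div_str_pos; lia).
  assert (Hd' : 1 <= INR d) by (apply (le_INR 1); lia).
  apply le_INR in Hq. apply (Rmult_le_reg_r (2 * INR d)); [lra|].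
  unfold Rdiv. rewrite Rmult_assoc, Rinv_l, Rmult_1_r by lra.
  assert (HNle : (N <= d * (N / d) + d)%nat) by lia. apply le_INR in HNle.
  rewrite plus_INR, mult_INR in HNle. change (INR 1) with 1 in Hq. nra.
Qed.

Lemma gowers_configs_count_ge s N : (1 <= N)%nat ->
  INR (N / S s) ^ S s <= INR (length (gowers_configs s N)).
Proof.
  intros HN. set (M0 := (N / S s)%nat).
  assert (HM : (S s * M0 <= N)%nat) by (apply Nat.Div0.mul_div_le).
  unfold gowers_configs. rewrite length_filter_sumR, sumR_list_prod.
  set (ind := fun n h => if cube_in s N n h then 1 else 0).
  assert (Hind : forall n h, 0 <= ind n h) by (intros; unfold ind; destruct cube_in; lra).
  apply Rle_trans with (sumR (zrange 0 M0) (fun n => sumR (zbox s 0 M0) (ind n))).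
  - rewrite (sumR_ext _ (fun n => sumR (zbox s 0 M0) (fun _ => 1))).
    + rewrite sumR_const, length_zrange, sumR_const, length_zbox, Rmult_1_r, pow_INR. cbn [pow]. lra.
    + intros n Hn. apply sumR_ext. intros h Hh. apply In_zrange in Hn. apply In_zbox in Hh as [Hl HF].
      unfold ind, cube_in. replace (forallb _ _) with true; [reflexivity|].
      symmetry. apply forallb_forall. intros w _.
      pose proof (wdot_bounds w h (Z.of_nat M0 - 1)) as Hb. rewrite Hl in Hb.
      destruct Hb as [Hb0 Hb1]; [eapply Forall_impl; [|exact HF]; cbv beta; lia|].
      unfold in_interval. apply andb_true_intro. split; [apply Z.leb_le|apply Z.ltb_lt]; nia.
  - apply Rle_trans with (sumR (zrange 0 M0) (fun n => sumR (zbox s (1 - Z.of_nat N) (2 * N - 1)) (ind n))).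
    + apply sumR_le. intros n _. apply sumR_zbox_le; auto; lia.
    + apply sumR_zrange_le; try lia. intros n. apply sumR_nonneg. intros h _. apply Hind.
Qed.

Lemma ratio_le (S0 Nr Den q K c : R) (s : nat) : 0 < Nr -> 0 < c ->
  (Nr / c) ^ s <= Den -> Rabs S0 <= K * Nr ^ s * q -> S0 / Den <= K * c ^ s * q.
Proof.
  intros HN Hc HD HS.
  assert (Hpow : 0 < (Nr / c) ^ s) by (apply pow_lt, Rdiv_lt_0_compat; lra).
  assert (HNs : 0 < Nr ^ s) by (apply pow_lt; lra).
  assert (HK : 0 <= K * Nr ^ s * q) by (pose proof (Rabs_pos S0); lra).
  apply Rle_trans with (K * Nr ^ s * q / (Nr / c) ^ s).
  - unfold Rdiv. apply Rle_trans with (Rabs S0 * / Den).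
    + apply Rmult_le_compat_r; [apply Rlt_le, Rinv_0_lt_compat; lra|apply Rle_abs].
    + apply Rmult_le_compat; [apply Rabs_pos|apply Rlt_le, Rinv_0_lt_compat; lra|exact HS|].
      apply Rinv_le_contravar; lra.
  - right. unfold Rdiv. rewrite Rpow_mult_distr, pow_inv. field. split; [|lra].
    apply pow_nonzero. lra.
Qed.

Lemma digit_scale_bounds N b : (1 <= b)%nat -> (1 <= N)%nat ->
  let j := (Nat.log2 N / (2 * b))%nat in let P := (2 ^ (j * b))%nat in
  (1 <= P /\ P * P <= N /\ N <= P * (N / P + 1) <= 2 * N /\ j <= j * b)%nat.
Proof.
  intros Hb HN j P.
  pose proof (Nat.log2_spec N ltac:(lia)) as [HL _].
  assert (H2k : (2 * (j * b) <= Nat.log2 N)%nat)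
    by (unfold j; pose proof (Nat.Div0.mul_div_le (Nat.log2 N) (2 * b)); nia).
  assert (HP1 : (1 <= P)%nat) by (unfold P; pose proof (Nat.pow_nonzero 2 (j * b)); lia).
  assert (HPP : (P * P <= N)%nat).
  { unfold P. rewrite <- Nat.pow_add_r.
    pose proof (Nat.pow_le_mono_r 2 (j * b + j * b) (Nat.log2 N) ltac:(lia) ltac:(lia)). lia. }
  pose proof (Nat.div_mod N P ltac:(lia)). pose proof (Nat.mod_upper_bound N P ltac:(lia)).
  pose proof (Nat.Div0.mul_div_le N P).
  repeat split; nia.
Qed.

Definition saving_exponent (s' N : nat) : nat := (Nat.log2 N / (2 * block_period s'))%nat.

Lemma block_period_pos s' : (1 <= block_period s')%nat.
Proof. unfold block_period, block_len. pose proof (block_paths_ge2 s'). nia. Qed.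

Lemma gowers_numerator_bound s' N : (1 <= N)%nat ->
  Rabs (sumR (zrange 0 N) (fun n => sumR (zbox (S s') (1 - Z.of_nat N) (2 * N - 1)) (cube_term (S s') N n)))
  <= (2 * 4 ^ S s' + 2 * 8 ^ S s') * INR N ^ S (S s') * (/ 2) ^ saving_exponent s' N.
Proof.
  intros HN. set (s := S s'). set (j := (Nat.log2 N / (2 * block_period s'))%nat).
  change (saving_exponent s' N) with j. set (k := (j * block_period s')%nat).
  set (P := (2 ^ k)%nat). set (A1 := (N / P + 1)%nat).
  destruct (digit_scale_bounds N (block_period s') (block_period_pos s') HN)
    as (HP1 & HPP & [HPA1 HPA2] & Hjk).
  fold j k P A1 in HP1, HPP, HPA1, HPA2, Hjk.
  rewrite (gowers_numerator_aligned s N P A1) by lia.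
  set (H := zbox s (Z.of_nat P * - Z.of_nat A1) (P * (2 * A1))).
  set (total := sumR (zrange 0 (P * A1)) (fun n => sumR H (cube_term s N n))).
  set (approx := sumR (zrange 0 (P * A1)) (fun n => sumR H (cube_term_approx s N k n))).
  set (err := sumR (zrange 0 (P * A1)) (fun n =>
    sumR H (fun h => Rabs (cube_term s N n h - cube_term_approx s N k n h)))).
  assert (Hdiff : Rabs (total - approx) <= err).
  { eapply Rle_trans; [apply Rabs_sumR_sub_le|]. apply sumR_le. intros n _. apply Rabs_sumR_sub_le. }
  pose proof (Rabs_triang approx (total - approx)) as Htri.
  replace (approx + (total - approx)) with total in Htri by ring.
  assert (Happrox : Rabs approx <= INR A1 * (INR ((2 * A1) ^ s) * (2 ^ (S s * k) * (/ 2) ^ j)))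
    by exact (approx_sum_bound s N k A1 _ (fun Φ HΦ => transfer_decay s' Φ HΦ j)).
  assert (Herr : err <= 2 * (INR (length H) * (2 ^ s * IZR (pow2 k)))) by apply approx_error_sum.
  unfold H in Herr. rewrite length_zbox, pow2_nat, <- INR_IZR_INZ in Herr. fold P in Herr.
  rewrite !pow_INR, !mult_INR in Happrox. rewrite !pow_INR, !mult_INR in Herr.
  change (INR 2) with 2 in Happrox, Herr.
  assert (HPk : INR P = 2 ^ k) by (unfold P; rewrite pow_INR; reflexivity).
  apply (le_INR 1) in HP1. apply le_INR in HPP, HPA2. rewrite mult_INR in HPP. rewrite !mult_INR in HPA2.
  change (INR 1) with 1 in HP1. change (INR 2) with 2 in HPA2. pose proof (pos_INR A1).
  pose proof (main_plus_error_le (INR N) (INR P) (INR A1) ((/ 2) ^ j) s j k HP1 HPP HPk eq_refl Hjk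
    ltac:(lra) HPA2).
  lra.
Qed.

Definition rs_constant (s' : nat) : R :=
  (2 * 4 ^ S s' + 2 * 8 ^ S s') * (2 * INR (S (S s'))) ^ S (S s').

Lemma rs_constant_pos s' : 0 < rs_constant s'.
Proof.
  unfold rs_constant. pose proof (pow_lt 4 (S s') ltac:(lra)). pose proof (pow_lt 8 (S s') ltac:(lra)).
  pose proof (lt_0_INR (S (S s')) ltac:(lia)). apply Rmult_lt_0_compat; [lra|apply pow_lt; lra].
Qed.

Lemma gowers_avg_bound s' N : (2 * S (S s') <= N)%nat ->
  gowers_avg (S s') N rsZ <= rs_constant s' * (/ 2) ^ saving_exponent s' N.
Proof.
  intros HN. unfold gowers_avg, rs_constant. rewrite gowers_numerator_eq.
  assert (HNr : 0 < INR N) by (apply lt_0_INR; lia).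
  assert (Hc : 0 < INR (S (S s'))) by (apply lt_0_INR; lia).
  apply ratio_le with (Nr := INR N); [exact HNr|lra| |apply gowers_numerator_bound; lia].
  eapply Rle_trans; [|apply gowers_configs_count_ge; lia].
  apply pow_incr. split; [apply Rlt_le, Rdiv_lt_0_compat; lra|apply INR_div_ge_half; lia].
Qed.

Lemma gowers_norm_le_avg s N f B : 0 < B -> gowers_avg s N f <= B ->
  gowers_norm s N f <= Rpower B (/ 2 ^ s).
Proof.
  intros HB Havg. unfold gowers_norm. destruct (Rle_dec (gowers_avg s N f) 0).
  - apply Rlt_le, exp_pos.
  - apply Rle_Rpower_l; [apply Rlt_le, Rinv_0_lt_compat, pow_lt; lra|lra].
Qed.

Lemma half_pow_div_log2_le N c : (1 <= c)%nat -> (1 <= N)%nat ->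
  (/ 2) ^ (Nat.log2 N / c) <= 2 * Rpower (INR N) (- / INR c).
Proof.
  intros Hc HN. remember (Nat.log2 N / c)%nat as j eqn:Hj.
  assert (Hcr : 0 < INR c) by (apply lt_0_INR; lia).
  assert (HNr : 0 < INR N) by (apply lt_0_INR; lia).
  assert (Hlog : (N < 2 ^ (c * S j))%nat).
  { pose proof (Nat.log2_spec N ltac:(lia)) as [_ HL].
    pose proof (Nat.div_mod (Nat.log2 N) c ltac:(lia)).
    pose proof (Nat.mod_upper_bound (Nat.log2 N) c ltac:(lia)).
    eapply Nat.lt_le_trans; [exact HL|]. apply Nat.pow_le_mono_r; [lia|]. rewrite Hj. nia. }
  apply lt_INR in Hlog. rewrite pow_INR in Hlog. change (INR 2) with 2 in Hlog.
  assert (Hroot : Rpower (INR N) (/ INR c) <= 2 ^ S j).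
  { eapply Rle_trans.
    { apply (Rle_Rpower_l (INR N) (2 ^ (c * S j))); [apply Rlt_le, Rinv_0_lt_compat|split]; lra. }
    rewrite <- (Rpower_pow (c * S j) 2), Rpower_mult by lra.
    replace (INR (c * S j) * / INR c) with (INR (S j)) by (rewrite mult_INR; field; lra).
    rewrite Rpower_pow by lra. lra. }
  assert (Hpos : 0 < Rpower (INR N) (/ INR c)) by apply exp_pos.
  rewrite Rpower_Ropp, pow_inv. cbn [pow] in Hroot |- *.
  replace (/ 2 ^ j) with (2 * / (2 * 2 ^ j)) by (field; apply pow_nonzero; lra).
  apply Rmult_le_compat_l; [lra|]. apply Rinv_le_contravar; lra.
Qed.

Theorem theoremB :
  forall s : nat, (1 <= s)%nat ->
  exists c : R, 0 < c /\
  exists (C : R) (N0 : nat),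
    forall N : nat, (N0 <= N)%nat ->
      gowers_norm s N rsZ <= C * Rpower (INR N) (- c).
Proof.
  intros s Hs. destruct s as [|s']; [lia|].
  set (b := (2 * block_period s')%nat). set (e := / 2 ^ S s').
  assert (Hb : 0 < INR b) by (apply lt_0_INR; pose proof (block_period_pos s'); lia).
  assert (He : 0 < e) by (apply Rinv_0_lt_compat, pow_lt; lra).
  pose proof (rs_constant_pos s') as HK.
  exists (/ INR b * e). split; [apply Rmult_lt_0_compat; [apply Rinv_0_lt_compat|]; lra|].
  exists (Rpower (2 * rs_constant s') e), (2 * S (S s'))%nat. intros N HN.
  assert (HNr : 0 < INR N) by (apply lt_0_INR; lia).
  assert (HNc : 0 < Rpower (INR N) (- / INR b)) by apply exp_pos.
  eapply Rle_trans; [apply (gowers_norm_le_avg _ _ _ (2 * rs_constant s' * Rpower (INR N) (- / INR b)))|].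
  - apply Rmult_lt_0_compat; lra.
  - eapply Rle_trans; [apply gowers_avg_bound; lia|].
    replace (2 * rs_constant s' * _) with (rs_constant s' * (2 * Rpower (INR N) (- / INR b))) by ring.
    apply Rmult_le_compat_l; [lra|].
    apply half_pow_div_log2_le; [unfold b; pose proof (block_period_pos s')|]; lia.
  - fold e. rewrite <- (Rpower_mult_distr (2 * rs_constant s')), Rpower_mult by lra.
    right. f_equal. f_equal. ring.
Qed.
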